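(* Let $X=X(s)$ be a strictly convex $C^{(3)}$ curve in the plane $\mathbb{R}^2$, parametrized by arclength. Suppose there is a function $\lambda(s)$ such that for all $s$ and all sufficiently small $h_1,h_2$ (with $X(s),X(s+h_1),X(s+h_2)$ distinct) we have $$U(s,h_1,h_2)=\lambda(s)\,T(s,h_1,h_2).$$ Then $\lambda(s)=\frac12$ for all $s$ and $X$ is an open part of a parabola.
   Context: A regular plane curve $X$ defined on an open interval is convex if for every point of $X$ the trace of $X$ lies entirely in one closed half-plane determined by the tangent line at that point. A simple convex curve $X$ is strictly convex if it is of class $C^{(3)}$ and has positive curvature with respect to the unit normal pointing to the convex side. For three distinct points $A=X(s)$, $A_i=X(s+h_i)$ ($i=1,2$) on $X$, let $\ell,\ell_1,\ell_2$ be the tangent lines of $X$ at $A,A_1,A_2$, and let $B=\ell_1\cap\ell_2$, $B_1=\ell\cap\ell_1$, $B_2=\ell\cap\ell_2$. Define $T(s,h_1,h_2)=|\triangle AA_1A_2|$ and $U(s,h_1,h_2)=|\triangle BB_1B_2|$ (areas). *)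

From Stdlib Require Import Reals Lra.
From Coquelicot Require Import Coquelicot.
Open Scope R_scope.

Definition pt := (R * R)%type.

Definition vsub (p q : pt) : pt := (fst p - fst q, snd p - snd q).
Definition vadd (p q : pt) : pt := (fst p + fst q, snd p + snd q).
Definition vscal (k : R) (p : pt) : pt := (k * fst p, k * snd p).

Definition cross (u v : pt) : R := fst u * snd v - snd u * fst v.

Definition tri_area (P Q R0 : pt) : R := Rabs (cross (vsub Q P) (vsub R0 P)) / 2.

(* intersection point of the lines P + t u and Q + r v (meaningful when
   cross u v <> 0, which is always assumed where it is used) *)
Definition line_inter (P u Q v : pt) : pt :=
  vadd P (vscal (cross (vsub Q P) v / cross u v) u).

Definition curve (x y : R -> R) (s : R) : pt := (x s, y s).
Definition tangent (x y : R -> R) (s : R) : pt := (Derive x s, Derive y s).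

Definition in_I (a b : Rbar) (s : R) : Prop := Rbar_lt a s /\ Rbar_lt s b.

Definition C3_on (a b : Rbar) (f : R -> R) : Prop :=
  forall s, in_I a b s ->
    ex_derive_n f 1 s /\ ex_derive_n f 2 s /\ ex_derive_n f 3 s /\
    continuous (Derive_n f 3) s.

Definition arclength_on (a b : Rbar) (x y : R -> R) : Prop :=
  forall s, in_I a b s -> (Derive x s) ^ 2 + (Derive y s) ^ 2 = 1.

(* signed curvature w.r.t. the normal J X' = (-y', x') *)
Definition curvature (x y : R -> R) (s : R) : R :=
  Derive x s * Derive_n y 2 s - Derive y s * Derive_n x 2 s.

(* The normal sigma * (-y', x') points to the convex side iff
   sigma * cross(X'(s), X(t) - X(s)) >= 0 for all t; the curvature w.r.t.
   that normal is sigma * curvature. *)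
Definition strictly_convex (a b : Rbar) (x y : R -> R) : Prop :=
  C3_on a b x /\ C3_on a b y /\
  (forall s t, in_I a b s -> in_I a b t -> curve x y s = curve x y t -> s = t) /\
  (forall s, in_I a b s ->
     exists sigma : R, (sigma = 1 \/ sigma = -1) /\
       (forall t, in_I a b t ->
          0 <= sigma * cross (tangent x y s) (vsub (curve x y t) (curve x y s))) /\
       0 < sigma * curvature x y s).

Definition T_area (x y : R -> R) (s h1 h2 : R) : R :=
  tri_area (curve x y s) (curve x y (s + h1)) (curve x y (s + h2)).

(* U(s,h1,h2) = |triangle B B1 B2|, B = l1 ∩ l2, B1 = l ∩ l1, B2 = l ∩ l2 *)
Definition U_area (x y : R -> R) (s h1 h2 : R) : R :=
  let A := curve x y s in let A1 := curve x y (s + h1) in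
  let A2 := curve x y (s + h2) in
  let t := tangent x y s in let t1 := tangent x y (s + h1) in
  let t2 := tangent x y (s + h2) in
  tri_area (line_inter A1 t1 A2 t2) (line_inter A t A1 t1) (line_inter A t A2 t2).

(* A parabola: image of y = k x^2 (k <> 0) under a rigid motion,
   i.e. { O + t u + k t^2 v | t in R } with (u, v) orthonormal. *)
Definition is_parabola (P : pt -> Prop) : Prop :=
  exists (O u v : pt) (k : R),
    k <> 0 /\ fst u ^ 2 + snd u ^ 2 = 1 /\ fst v ^ 2 + snd v ^ 2 = 1 /\
    fst u * fst v + snd u * snd v = 0 /\
    forall p, P p <-> exists t : R, p = vadd O (vadd (vscal t u) (vscal (k * t ^ 2) v)).

From Stdlib Require Import Reals Lra Psatz.
From Coquelicot Require Import Coquelicot.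
Open Scope R_scope.

(* Write X(s+h) = X(s) + h c(h) and X'(s+h) = X'(s) + h d(h), with c and d continuous at 0.
   Substituting the third vertex A2 = X(s+h2) into U = lambda T and letting h2 -> 0 leaves a
   relation between X(s) and X(s+h) alone; letting h -> 0 in it forces lambda = 1/2.
   In the frame at X(s) made of the tangent and the normal towards the convex side, the
   coordinates p(h), q(h) of X(s+h) then satisfy 2 kappa (p q' - q p')^2 = q'^2 q, whose first
   integral p/q -+ 2/sqrt(2 kappa q) is constant on each side of h = 0. Its limit at 0 shows
   that near X(s) the curve lies on the parabola kappa (p - C q)^2 = 2 q having third order
   contact with it. Two such parabolas at nearby parameters share five points of the curve and
   hence coincide, so their normalized equation is locally, hence globally, independent of s:
   the whole curve lies on one parabola. *)

(** * Limits at 0 *)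

Definition near0 (P : R -> Prop) : Prop :=
  exists d, 0 < d /\ forall h, h <> 0 -> Rabs h < d -> P h.

Definition lim0 (f : R -> R) (l : R) : Prop :=
  forall eps, 0 < eps -> near0 (fun h => Rabs (f h - l) < eps).

Lemma near0_and P Q : near0 P -> near0 Q -> near0 (fun h => P h /\ Q h).
Proof.
  intros [d1 [Hd1 H1]] [d2 [Hd2 H2]]. exists (Rmin d1 d2). split; [now apply Rmin_pos|].
  intros h Hh0 Hh. pose proof (Rmin_l d1 d2); pose proof (Rmin_r d1 d2).
  split; [apply H1|apply H2]; auto; lra.
Qed.

Lemma near0_impl (P Q : R -> Prop) : near0 P -> (forall h, h <> 0 -> P h -> Q h) -> near0 Q.
Proof. intros [d [Hd H]] HPQ. exists d. split; auto. Qed.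

Lemma near0_abs_lt e : 0 < e -> near0 (fun h => Rabs h < e).
Proof. intros He. exists e. split; auto. Qed.

Lemma ball_R_abs (x y e : R) : ball x e y <-> Rabs (y - x) < e.
Proof. reflexivity. Qed.

Lemma lim0_is_lim f l : lim0 f l <-> is_lim f 0 l.
Proof.
  rewrite <- is_lim_spec. split.
  - intros H eps. destruct (H eps (cond_pos eps)) as [d [Hd H1]].
    exists (mkposreal d Hd). intros h Hh Hh0. rewrite ball_R_abs, Rminus_0_r in Hh. now apply H1.
  - intros H eps Heps. destruct (H (mkposreal eps Heps)) as [d Hd].
    exists d. split; [apply cond_pos|]. intros h Hh0 Hh. apply Hd; auto.
    now rewrite ball_R_abs, Rminus_0_r.
Qed.

Lemma lim0_const c : lim0 (fun _ => c) c.
Proof.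
  intros e He. exists 1. split; [lra|]. intros. rewrite Rminus_diag, Rabs_R0. lra.
Qed.

Lemma lim0_id : lim0 (fun h => h) 0.
Proof. intros e He. exists e. split; [lra|]. intros. now rewrite Rminus_0_r. Qed.

Lemma lim0_plus f g lf lg : lim0 f lf -> lim0 g lg -> lim0 (fun h => f h + g h) (lf + lg).
Proof. rewrite !lim0_is_lim. intros. now apply is_lim_plus'. Qed.

Lemma lim0_mult f g lf lg : lim0 f lf -> lim0 g lg -> lim0 (fun h => f h * g h) (lf * lg).
Proof. rewrite !lim0_is_lim. intros. now apply (is_lim_mult f g 0 lf lg). Qed.

Lemma lim0_opp f l : lim0 f l -> lim0 (fun h => - f h) (- l).
Proof. rewrite !lim0_is_lim. intros. now apply (is_lim_opp f 0 l). Qed.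

Lemma lim0_minus f g lf lg : lim0 f lf -> lim0 g lg -> lim0 (fun h => f h - g h) (lf - lg).
Proof. intros. apply lim0_plus; auto. now apply lim0_opp. Qed.

Lemma lim0_abs f l : lim0 f l -> lim0 (fun h => Rabs (f h)) (Rabs l).
Proof. rewrite !lim0_is_lim. intros. now apply (is_lim_Rabs f 0 l). Qed.

Lemma lim0_inv f l : lim0 f l -> l <> 0 -> lim0 (fun h => / f h) (/ l).
Proof.
  rewrite !lim0_is_lim. intros. apply (is_lim_inv f 0 l); auto. now intros [= ].
Qed.

Lemma lim0_sqrt f l : lim0 f l -> lim0 (fun h => sqrt (f h)) (sqrt l).
Proof.
  rewrite !lim0_is_lim. intros. apply (is_lim_comp_continuous f sqrt 0 l); auto.
  apply continuous_sqrt.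
Qed.

Lemma lim0_div_const f l c : lim0 f l -> lim0 (fun h => f h / c) (l / c).
Proof. intros H. apply lim0_mult; [exact H | apply lim0_const]. Qed.

Lemma lim0_pow f l n : lim0 f l -> lim0 (fun h => f h ^ n) (l ^ n).
Proof. intros H. induction n; simpl; [apply lim0_const | now apply lim0_mult]. Qed.

Lemma lim0_eq_limit f l l' : lim0 f l -> l = l' -> lim0 f l'.
Proof. now intros H <-. Qed.

Lemma lim0_near_ext f g l : near0 (fun h => f h = g h) -> lim0 f l -> lim0 g l.
Proof.
  intros E H eps Heps. apply (near0_impl _ _ (near0_and _ _ E (H eps Heps))).
  intros h _ [<- Hh]. exact Hh.
Qed.

Lemma lim0_unique_near f g l1 l2 :
  near0 (fun h => f h = g h) -> lim0 f l1 -> lim0 g l2 -> l1 = l2.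
Proof.
  intros E H1 H2. apply (lim0_near_ext _ _ _ E) in H1. rewrite lim0_is_lim in H1, H2.
  apply is_lim_unique in H1, H2. rewrite H1 in H2. now injection H2.
Qed.

Lemma lim0_near0_pos f l : lim0 f l -> 0 < l -> near0 (fun h => 0 < f h).
Proof.
  intros H Hl. apply (near0_impl _ _ (H l Hl)). intros h _ Hh.
  unfold Rabs in Hh; destruct Rcase_abs in Hh; lra.
Qed.

Lemma lim0_near0_neq f l : lim0 f l -> l <> 0 -> near0 (fun h => f h <> 0).
Proof.
  intros H Hl. apply (near0_impl _ _ (H _ (Rabs_pos_lt _ Hl))). intros h _ Hh E.
  rewrite E, Rminus_0_l, Rabs_Ropp in Hh. lra.
Qed.

Ltac lim0_tac :=
  lazymatch goal with
  | |- lim0 (fun h => @?A h + @?B h) _ => eapply (lim0_plus A B); [lim0_tac | lim0_tac]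
  | |- lim0 (fun h => @?A h - @?B h) _ => eapply (lim0_minus A B); [lim0_tac | lim0_tac]
  | |- lim0 (fun h => @?A h * @?B h) _ => eapply (lim0_mult A B); [lim0_tac | lim0_tac]
  | |- lim0 (fun h => @?A h / ?c) _ => eapply (lim0_div_const A _ c); lim0_tac
  | |- lim0 (fun h => - @?A h) _ => eapply (lim0_opp A); lim0_tac
  | |- lim0 (fun h => Rabs (@?A h)) _ => eapply (lim0_abs A); lim0_tac
  | |- lim0 (fun h => sqrt (@?A h)) _ => eapply (lim0_sqrt A); lim0_tac
  | |- lim0 (fun h => @?A h ^ ?n) _ => eapply (lim0_pow A _ n); lim0_tac
  | |- lim0 _ _ => first [apply lim0_id | apply lim0_const | eassumption]
  end.

(** * Taylor expansion of a [C^3] function *)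

Lemma lim0_div_pow g n :
  (forall eps, 0 < eps -> exists d, 0 < d /\
     forall h, Rabs h < d -> Rabs (g h) <= eps * Rabs h ^ n) ->
  lim0 (fun h => g h / h ^ n) 0.
Proof.
  intros H eps Heps. destruct (H (eps / 2) ltac:(lra)) as [d [Hd Hb]].
  exists d. split; auto. intros h Hh0 Hh. specialize (Hb h Hh).
  assert (Hp : 0 < Rabs h ^ n) by (apply pow_lt, Rabs_pos_lt; auto).
  rewrite Rminus_0_r, Rabs_div, <- RPow_abs by (apply pow_nonzero; auto).
  apply (Rmult_lt_reg_r (Rabs h ^ n)); auto. unfold Rdiv.
  rewrite Rmult_assoc, Rinv_l by lra. nra.
Qed.

Lemma is_derive_continuity_pt g x l : is_derive g x l -> continuity_pt g x.
Proof.
  intros H. apply continuity_pt_filterlim.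
  apply (@ex_derive_continuous R_AbsRing R_NormedModule). now exists l.
Qed.

Lemma mvt_pow_bound (g g' : R -> R) eta M n : 0 < eta -> 0 <= M ->
  (forall h, Rabs h < eta -> is_derive g h (g' h)) -> g 0 = 0 ->
  (forall h, Rabs h < eta -> Rabs (g' h) <= M * Rabs h ^ n) ->
  forall h, Rabs h < eta -> Rabs (g h) <= M * Rabs h ^ S n.
Proof.
  intros He HM Hd H0 Hb h Hh.
  assert (Hbetween : forall c, Rmin 0 h <= c <= Rmax 0 h -> Rabs c <= Rabs h).
  { unfold Rmin, Rmax. intros c Hc. destruct (Rle_dec 0 h); unfold Rabs;
      repeat destruct Rcase_abs; lra. }
  destruct (MVT_gen g 0 h g') as [c [Hc E]].
  - intros c Hc. apply Hd. pose proof (Hbetween c ltac:(lra)). lra.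
  - intros c Hc. eapply is_derive_continuity_pt, Hd. pose proof (Hbetween c Hc). lra.
  - rewrite H0, !Rminus_0_r in E. rewrite E, Rabs_mult. simpl.
    pose proof (Hbetween c Hc) as Hch.
    assert (Hgc : Rabs (g' c) <= M * Rabs h ^ n).
    { eapply Rle_trans; [apply Hb; lra|]. apply Rmult_le_compat_l; auto.
      apply pow_incr. split; auto. apply Rabs_pos. }
    rewrite (Rmult_comm (Rabs h)), <- Rmult_assoc.
    apply Rmult_le_compat_r; [apply Rabs_pos | exact Hgc].
Qed.

Lemma in_I_near a b s : in_I a b s ->
  exists eta, 0 < eta /\ forall h, Rabs h < eta -> in_I a b (s + h).
Proof.
  intros [Ha Hb].
  assert (Ea : exists ea, 0 < ea /\ forall h, Rabs h < ea -> Rbar_lt a (s + h)).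
  { destruct a as [a| |]; simpl in *; try contradiction.
    - exists (s - a). split; [lra|]. intros h Hh. unfold Rabs in Hh; destruct Rcase_abs; lra.
    - exists 1. split; [lra|]. intros; exact I. }
  assert (Eb : exists eb, 0 < eb /\ forall h, Rabs h < eb -> Rbar_lt (s + h) b).
  { destruct b as [b| |]; simpl in *; try contradiction.
    - exists (b - s). split; [lra|]. intros h Hh. unfold Rabs in Hh; destruct Rcase_abs; lra.
    - exists 1. split; [lra|]. intros; exact I. }
  destruct Ea as [ea [Hea Ea]], Eb as [eb [Heb Eb]].
  exists (Rmin ea eb). split; [now apply Rmin_pos|].
  intros h Hh. pose proof (Rmin_l ea eb); pose proof (Rmin_r ea eb).
  split; [apply Ea | apply Eb]; lra.
Qed.

Lemma in_I_between a b s1 s2 c : in_I a b s1 -> in_I a b s2 -> s1 <= c <= s2 -> in_I a b c.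
Proof.
  intros [A1 B1] [A2 B2] H. split.
  - destruct a; simpl in *; auto; lra.
  - destruct b; simpl in *; auto; lra.
Qed.

Lemma in_I_nonempty a b : Rbar_lt a b -> exists s, in_I a b s.
Proof.
  intros H. destruct a as [a| |], b as [b| |]; simpl in H; try contradiction.
  - exists ((a + b) / 2). split; simpl; lra.
  - exists (a + 1). split; simpl; auto; lra.
  - exists (b - 1). split; simpl; auto; lra.
  - exists 0. split; simpl; auto.
Qed.

Lemma C3_on_is_derive a b f s : C3_on a b f -> in_I a b s ->
  is_derive f s (Derive f s) /\ is_derive (Derive f) s (Derive_n f 2 s) /\
  is_derive (Derive_n f 2) s (Derive_n f 3 s) /\ continuous (Derive_n f 3) s.
Proof.
  intros H Hs. destruct (H s Hs) as [H1 [H2 [H3 H4]]].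
  split; [|split; [|split]]; [apply Derive_correct, H1 | apply (Derive_correct (Derive f)), H2
                              | apply (Derive_correct (Derive_n f 2)), H3 | exact H4].
Qed.

Lemma lim0_shift_continuous (g : R -> R) s : continuous g s -> lim0 (fun h => g (s + h)) (g s).
Proof.
  intros Hc. apply lim0_is_lim.
  apply (is_lim_comp_continuous (fun h => s + h) g 0 s); [|exact Hc].
  apply lim0_is_lim, (lim0_eq_limit _ (s + 0)); [lim0_tac | ring].
Qed.

Definition taylor_rem (g : R -> R) t h :=
  (g (t+h) - g t - h * Derive g t - h^2/2 * Derive_n g 2 t) / h^3.

Definition dtaylor_rem (g : R -> R) t h :=
  (Derive g (t+h) - Derive g t - h * Derive_n g 2 t) / h^2.

Section Taylor.

Variables (a b : Rbar) (f : R -> R) (s : R).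
Hypotheses (Hf : C3_on a b f) (Hs : in_I a b s).

Let D1 := Derive f.
Let D2 := Derive_n f 2.
Let D3 := Derive_n f 3.

Lemma taylor_error_bounds eps : 0 < eps -> exists d, 0 < d /\ forall h, Rabs h < d ->
  Rabs (f (s+h) - f s - h * D1 s - h^2/2 * D2 s - h^3/6 * D3 s) <= eps * Rabs h ^ 3 /\
  Rabs (D1 (s+h) - D1 s - h * D2 s - h^2/2 * D3 s) <= eps * Rabs h ^ 2.
Proof.
  intros Heps.
  destruct (in_I_near a b s Hs) as [eta [Heta Hin]].
  destruct (C3_on_is_derive a b f s Hf Hs) as [_ [_ [_ Hc3]]].
  destruct (lim0_shift_continuous _ _ Hc3 eps Heps) as [d [Hd Hd3]].
  set (r := Rmin eta d). assert (Hr : 0 < r) by now apply Rmin_pos.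
  assert (Hder : forall h, Rabs h < r ->
     is_derive f (s+h) (D1 (s+h)) /\ is_derive D1 (s+h) (D2 (s+h)) /\
     is_derive D2 (s+h) (D3 (s+h))).
  { intros h Hh. pose proof (Rmin_l eta d).
    destruct (C3_on_is_derive a b f (s+h) Hf (Hin h ltac:(unfold r in Hh; lra))) as [A [B [C _]]].
    auto. }
  assert (B2 : forall h, Rabs h < r -> Rabs (D2 (s+h) - D2 s - h * D3 s) <= eps * Rabs h ^ 1).
  { apply (mvt_pow_bound _ (fun h => D3 (s+h) - D3 s)); auto; [lra | | rewrite Rplus_0_r; ring |].
    - intros k Hk. destruct (Hder k Hk) as [_ [_ HD]].
      auto_derive; [now exists (D3 (s+k))|].
      replace (Derive (fun x : R => D2 x) (s + k)) with (D3 (s + k))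
        by (symmetry; now apply is_derive_unique). ring.
    - intros k Hk. simpl. rewrite Rmult_1_r. destruct (Req_dec k 0) as [->|Hk0].
      + rewrite Rplus_0_r, Rminus_diag, Rabs_R0. lra.
      + left. apply Hd3; auto. pose proof (Rmin_r eta d). unfold r in Hk. lra. }
  assert (B1 : forall h, Rabs h < r ->
     Rabs (D1 (s+h) - D1 s - h * D2 s - h^2/2 * D3 s) <= eps * Rabs h ^ 2).
  { apply (mvt_pow_bound _ (fun h => D2 (s+h) - D2 s - h * D3 s)); auto; [lra | |].
    - intros k Hk. destruct (Hder k Hk) as [_ [HD _]].
      auto_derive; [now exists (D2 (s+k))|].
      replace (Derive (fun x : R => D1 x) (s + k)) with (D2 (s + k))
        by (symmetry; now apply is_derive_unique). field.
    - rewrite Rplus_0_r. field. }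
  exists r. split; auto. intros h Hh. split; [|now apply B1].
  revert h Hh.
  apply (mvt_pow_bound _ (fun h => D1 (s+h) - D1 s - h * D2 s - h^2/2 * D3 s)); auto; [lra | |].
  - intros k Hk. destruct (Hder k Hk) as [HD _].
    auto_derive; [now exists (D1 (s+k))|].
    replace (Derive (fun x : R => f x) (s + k)) with (D1 (s + k))
        by (symmetry; now apply is_derive_unique). field.
  - rewrite Rplus_0_r. field.
Qed.

Lemma lim0_taylor_rem : lim0 (taylor_rem f s) (D3 s / 6).
Proof.
  apply (lim0_near_ext (fun h => (f (s+h) - f s - h * D1 s - h^2/2 * D2 s - h^3/6 * D3 s) / h^3
                                 + D3 s / 6)).
  - exists 1. split; [lra|]. intros h Hh _. unfold taylor_rem, D1, D2, D3. field. auto.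
  - apply (lim0_eq_limit _ (0 + D3 s / 6)); [|ring]. apply lim0_plus; [|apply lim0_const].
    apply lim0_div_pow. intros eps Heps.
    destruct (taylor_error_bounds eps Heps) as [d [Hd B]]. exists d. split; auto. apply B.
Qed.

Lemma lim0_dtaylor_rem : lim0 (dtaylor_rem f s) (D3 s / 2).
Proof.
  apply (lim0_near_ext (fun h => (D1 (s+h) - D1 s - h * D2 s - h^2/2 * D3 s) / h^2 + D3 s / 2)).
  - exists 1. split; [lra|]. intros h Hh _. unfold dtaylor_rem, D1, D2, D3. field. auto.
  - apply (lim0_eq_limit _ (0 + D3 s / 2)); [|ring]. apply lim0_plus; [|apply lim0_const].
    apply lim0_div_pow. intros eps Heps.
    destruct (taylor_error_bounds eps Heps) as [d [Hd B]]. exists d. split; auto. apply B.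
Qed.

End Taylor.

(** For [h <> 0], [chord f s h = (f (s+h) - f s) / h], [dchord f s h = (f' (s+h) - f' s) / h] and
    [chord2 f s h = (chord f s h - f' s) / h]; written polynomially in [h], so that the expansions
    below are ring identities. *)
Definition chord2 (f : R -> R) s h := Derive_n f 2 s / 2 + h * taylor_rem f s h.
Definition chord (f : R -> R) s h := Derive f s + h * chord2 f s h.
Definition dchord (f : R -> R) s h := Derive_n f 2 s + h * dtaylor_rem f s h.

Lemma chord_expand f s h : h <> 0 -> f (s+h) = f s + h * chord f s h.
Proof. intros. unfold chord, chord2, taylor_rem. field. auto. Qed.

Lemma dchord_expand f s h : h <> 0 -> Derive f (s+h) = Derive f s + h * dchord f s h.
Proof. intros. unfold dchord, dtaylor_rem. field. auto. Qed.

Section ChordLimits.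

Variables (a b : Rbar) (f : R -> R) (s : R).
Hypotheses (Hf : C3_on a b f) (Hs : in_I a b s).

Lemma lim0_chord2 : lim0 (chord2 f s) (Derive_n f 2 s / 2).
Proof.
  pose proof (lim0_taylor_rem a b f s Hf Hs). unfold chord2.
  eapply lim0_eq_limit; [lim0_tac | ring].
Qed.

Lemma lim0_chord : lim0 (chord f s) (Derive f s).
Proof.
  pose proof lim0_chord2. unfold chord. eapply lim0_eq_limit; [lim0_tac | ring].
Qed.

Lemma lim0_dchord : lim0 (dchord f s) (Derive_n f 2 s).
Proof.
  pose proof (lim0_dtaylor_rem a b f s Hf Hs). unfold dchord.
  eapply lim0_eq_limit; [lim0_tac | ring].
Qed.

End ChordLimits.

(** * The tangent triangles and [lambda = 1/2] *)

Lemma strictly_convex_C3 a b x y : strictly_convex a b x y -> C3_on a b x /\ C3_on a b y.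
Proof. now intros [Hx [Hy _]]. Qed.

Lemma strictly_convex_curvature_neq0 a b x y s :
  strictly_convex a b x y -> in_I a b s -> curvature x y s <> 0.
Proof.
  intros [_ [_ [_ H]]] Hs. destruct (H s Hs) as [sigma [_ [_ Hk]]].
  intros E. rewrite E, Rmult_0_r in Hk. lra.
Qed.

Lemma strictly_convex_curve_neq a b x y s t : strictly_convex a b x y ->
  in_I a b s -> in_I a b t -> s <> t -> curve x y s <> curve x y t.
Proof. intros [_ [_ [H _]]] Hs Ht Hst E. now apply Hst, H. Qed.

Lemma tangent_triangle_area (P0 d0 P1 d1 P2 d2 : pt) :
  cross d0 d1 <> 0 -> cross d0 d2 <> 0 -> cross d1 d2 <> 0 ->
  tri_area (line_inter P1 d1 P2 d2) (line_inter P0 d0 P1 d1) (line_inter P0 d0 P2 d2) =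
  (cross d0 P0 * cross d1 d2 - cross d1 P1 * cross d0 d2 + cross d2 P2 * cross d0 d1) ^ 2 /
   (2 * Rabs (cross d0 d1 * cross d0 d2 * cross d1 d2)).
Proof.
  destruct P0 as [a0 b0], P1 as [a1 b1], P2 as [a2 b2], d0 as [u0 v0], d1 as [u1 v1], d2 as [u2 v2].
  unfold tri_area, line_inter, cross, vsub, vadd, vscal; simpl. intros H1 H2 H3.
  set (c01 := u0 * v1 - v0 * u1) in *. set (c02 := u0 * v2 - v0 * u2) in *.
  set (c12 := u1 * v2 - v1 * u2) in *.
  match goal with |- Rabs ?X / 2 = _ => replace X with
   (((u0 * b0 - v0 * a0) * c12 - (u1 * b1 - v1 * a1) * c02 + (u2 * b2 - v2 * a2) * c01) ^ 2
     / (c01 * c02 * c12)) by (unfold c01, c02, c12 in *; field; auto) end.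
  assert (HD : c01 * c02 * c12 <> 0) by (repeat apply Rmult_integral_contrapositive_currified; auto).
  rewrite Rabs_div, (Rabs_right (_ ^ 2)) by (auto; apply Rle_ge, pow2_ge_0).
  field. now apply Rabs_no_R0.
Qed.

Lemma cross_shift_r (t d : pt) h : cross t (vadd t (vscal h d)) = h * cross t d.
Proof. destruct t, d. unfold cross, vadd, vscal; simpl. ring. Qed.

Lemma cancel_scale k N D lam X : k <> 0 -> D <> 0 ->
  (k * N) ^ 2 / (2 * (Rabs k * D)) = lam * (Rabs k * X / 2) -> N ^ 2 = lam * D * X.
Proof.
  intros Hk HD E. pose proof (Rabs_no_R0 k Hk) as Hak.
  assert (Hk2 : Rabs k * Rabs k = k * k).
  { rewrite <- Rabs_mult. apply Rabs_right, Rle_ge, Rle_0_sqr. }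
  transitivity ((k * N) ^ 2 / (2 * (Rabs k * D)) * (2 * D / Rabs k)).
  - replace ((k * N) ^ 2) with (Rabs k * Rabs k * N ^ 2) by (rewrite Hk2; ring). field. auto.
  - rewrite E. field. auto.
Qed.

(** With [A2 = A + h c] and [t2 = t + h d], the identity [U = lam T] loses a common factor [h^2];
    what remains has a finite limit as [h -> 0]. *)
Lemma U_area_near_vertex (A t A1 t1 c d : pt) h lam :
  h <> 0 -> cross t t1 <> 0 -> cross t d <> 0 -> cross t1 (vadd t (vscal h d)) <> 0 ->
  tri_area (line_inter A1 t1 (vadd A (vscal h c)) (vadd t (vscal h d)))
           (line_inter A t A1 t1) (line_inter A t (vadd A (vscal h c)) (vadd t (vscal h d))) =
    lam * tri_area A A1 (vadd A (vscal h c)) ->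
  (cross (vsub A1 A) t1 * cross t d + cross (vadd t (vscal h d)) c * cross t t1) ^ 2 =
    lam * (Rabs (cross t t1) * Rabs (cross t d) * Rabs (cross t1 (vadd t (vscal h d)))) *
      Rabs (cross (vsub A1 A) c).
Proof.
  intros Hh H01 Hd H12 E.
  assert (H02 : cross t (vadd t (vscal h d)) <> 0)
    by (rewrite cross_shift_r; now apply Rmult_integral_contrapositive_currified).
  rewrite tangent_triangle_area in E by auto.
  rewrite cross_shift_r in E.
  replace (cross t A * cross t1 (vadd t (vscal h d)) - cross t1 A1 * (h * cross t d)
           + cross (vadd t (vscal h d)) (vadd A (vscal h c)) * cross t t1)
    with (h * (cross (vsub A1 A) t1 * cross t d + cross (vadd t (vscal h d)) c * cross t t1)) in E
    by (destruct A, t, A1, t1, c, d; unfold cross, vsub, vadd, vscal; simpl; ring).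
  replace (tri_area A A1 (vadd A (vscal h c))) with (Rabs h * Rabs (cross (vsub A1 A) c) / 2) in E
    by (destruct A, A1, c; unfold tri_area, cross, vsub, vadd, vscal; simpl;
        rewrite <- Rabs_mult; f_equal; f_equal; ring).
  apply (cancel_scale h); auto.
  - repeat apply Rmult_integral_contrapositive_currified; now apply Rabs_no_R0.
  - rewrite <- E. f_equal. rewrite !Rabs_mult. ring.
Qed.

Definition U_eq_lambda_T_near (a b : Rbar) (x y : R -> R) (lambda : R -> R) s :=
  exists delta : R, 0 < delta /\
    forall h1 h2 : R,
      Rabs h1 < delta -> Rabs h2 < delta ->
      in_I a b (s + h1) -> in_I a b (s + h2) ->
      curve x y s <> curve x y (s + h1) ->
      curve x y s <> curve x y (s + h2) ->
      curve x y (s + h1) <> curve x y (s + h2) ->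
      cross (tangent x y s) (tangent x y (s + h1)) <> 0 ->
      cross (tangent x y s) (tangent x y (s + h2)) <> 0 ->
      cross (tangent x y (s + h1)) (tangent x y (s + h2)) <> 0 ->
      U_area x y s h1 h2 = lambda s * T_area x y s h1 h2.

Definition chordv (x y : R -> R) s h : pt := (chord x s h, chord y s h).
Definition dchordv (x y : R -> R) s h : pt := (dchord x s h, dchord y s h).

Definition chord2v (x y : R -> R) s h : pt := (chord2 x s h, chord2 y s h).

Lemma curve_shift x y s h : h <> 0 ->
  curve x y (s + h) = vadd (curve x y s) (vscal h (chordv x y s h)).
Proof.
  intros Hh. unfold curve, vadd, vscal, chordv; simpl. now rewrite !chord_expand.
Qed.

Lemma tangent_shift x y s h : h <> 0 ->
  tangent x y (s + h) = vadd (tangent x y s) (vscal h (dchordv x y s h)).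
Proof.
  intros Hh. unfold tangent, vadd, vscal, dchordv; cbn [fst snd]. now rewrite !dchord_expand.
Qed.

Lemma cancel_pow4 h k P lam V W : h <> 0 ->
  k ^ 2 * (h ^ 2 * P) ^ 2 = lam * (h * V) ^ 2 * Rabs k * Rabs (h ^ 2 * W) ->
  k ^ 2 * P ^ 2 = lam * V ^ 2 * Rabs k * Rabs W.
Proof.
  intros H0 E. rewrite Rabs_mult, (Rabs_right (h ^ 2)) in E by (apply Rle_ge, pow2_ge_0).
  apply (Rmult_eq_reg_l (h ^ 2 * h ^ 2));
    [|apply Rmult_integral_contrapositive_currified; apply pow_nonzero; auto].
  transitivity (k ^ 2 * (h ^ 2 * P) ^ 2); [ring|]. rewrite E. ring.
Qed.

Section AtPoint.

Variables (a b : Rbar) (x y : R -> R) (lambda : R -> R) (s : R).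
Hypotheses (Hsc : strictly_convex a b x y) (Hs : in_I a b s).

Lemma lim0_cross_tangent_dchordv :
  lim0 (fun h => cross (tangent x y s) (dchordv x y s h)) (curvature x y s).
Proof.
  destruct (strictly_convex_C3 _ _ _ _ Hsc) as [Cx Cy].
  pose proof (lim0_dchord a b x s Cx Hs). pose proof (lim0_dchord a b y s Cy Hs).
  unfold cross, tangent, dchordv; cbn [fst snd]. lim0_tac.
Qed.

Lemma area_identity_third_vertex : U_eq_lambda_T_near a b x y lambda s ->
  near0 (fun h1 =>
    let t := tangent x y s in let t1 := tangent x y (s + h1) in
    let w := vsub (curve x y (s + h1)) (curve x y s) in
    cross t t1 <> 0 /\
    near0 (fun h =>
      let c := chordv x y s h in let d := dchordv x y s h in
      (cross w t1 * cross t d + cross (vadd t (vscal h d)) c * cross t t1) ^ 2 =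
      lambda s * (Rabs (cross t t1) * Rabs (cross t d) * Rabs (cross t1 (vadd t (vscal h d)))) *
        Rabs (cross w c))).
Proof.
  intros [delta [Hd HU]].
  destruct (strictly_convex_C3 _ _ _ _ Hsc) as [Cx Cy].
  pose proof (lim0_dchord a b x s Cx Hs) as Ldx. pose proof (lim0_dchord a b y s Cy Hs) as Ldy.
  pose proof (strictly_convex_curvature_neq0 _ _ _ _ _ Hsc Hs) as Hk.
  destruct (in_I_near a b s Hs) as [eta [Heta Hin]].
  pose proof lim0_cross_tangent_dchordv as LV.
  set (t := tangent x y s) in *.
  set (r := Rmin delta eta).
  assert (Hrd : forall h, Rabs h < r -> Rabs h < delta /\ in_I a b (s + h)).
  { intros h Hh. pose proof (Rmin_l delta eta); pose proof (Rmin_r delta eta).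
    unfold r in Hh. split; [lra | apply Hin; lra]. }
  assert (Small : near0 (fun h => Rabs h < r /\ cross t (dchordv x y s h) <> 0))
    by exact (near0_and _ _ (near0_abs_lt r (Rmin_pos _ _ Hd Heta)) (lim0_near0_neq _ _ LV Hk)).
  assert (Hc : forall h, h <> 0 -> cross t (dchordv x y s h) <> 0 ->
                         cross t (tangent x y (s + h)) <> 0).
  { intros h Hh Hv. unfold t. rewrite tangent_shift, cross_shift_r by auto.
    now apply Rmult_integral_contrapositive_currified. }
  apply (near0_impl _ _ Small). intros h1 H10 [Hh1 Hv1]. cbv zeta. fold t.
  set (t1 := tangent x y (s + h1)).
  assert (H01 : cross t t1 <> 0) by now apply Hc.
  split; [exact H01|].
  assert (L12 : lim0 (fun h => cross t1 (vadd t (vscal h (dchordv x y s h)))) (cross t1 t)).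
  { unfold cross, vadd, vscal, dchordv; cbn [fst snd]. eapply lim0_eq_limit; [lim0_tac | ring]. }
  assert (H10' : cross t1 t <> 0).
  { replace (cross t1 t) with (- cross t t1) by (unfold cross; ring). now apply Ropp_neq_0_compat. }
  apply (near0_impl _ _ (near0_and _ _ Small (near0_and _ _ (near0_abs_lt _ (Rabs_pos_lt _ H10))
                                                         (lim0_near0_neq _ _ L12 H10')))).
  intros h Hh0 [[Hh Hv] [Hhh1 H12]].
  destruct (Hrd h1 Hh1) as [Hd1 Hi1]. destruct (Hrd h Hh) as [Hd2 Hi2].
  assert (Hneq : s + h1 <> s + h) by (intros E; assert (h1 = h) by lra; subst h; lra).
  assert (E := HU h1 h Hd1 Hd2 Hi1 Hi2
     (strictly_convex_curve_neq _ _ _ _ _ _ Hsc Hs Hi1 ltac:(lra))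
     (strictly_convex_curve_neq _ _ _ _ _ _ Hsc Hs Hi2 ltac:(lra))
     (strictly_convex_curve_neq _ _ _ _ _ _ Hsc Hi1 Hi2 Hneq)
     H01 (Hc h Hh0 Hv) ltac:(rewrite (tangent_shift x y s h) by auto; exact H12)).
  unfold U_area, T_area in E. cbv zeta in E.
  rewrite (curve_shift x y s h), (tangent_shift x y s h) in E by auto.
  apply (U_area_near_vertex _ _ _ _ _ _ h); auto.
Qed.

Lemma area_relation_two_points : U_eq_lambda_T_near a b x y lambda s ->
  near0 (fun h =>
    curvature x y s ^ 2 * cross (vsub (curve x y (s+h)) (curve x y s)) (tangent x y (s+h)) ^ 2 =
    lambda s * cross (tangent x y s) (tangent x y (s+h)) ^ 2 * Rabs (curvature x y s) *
      Rabs (cross (vsub (curve x y (s+h)) (curve x y s)) (tangent x y s))).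
Proof.
  intros HU.
  destruct (strictly_convex_C3 _ _ _ _ Hsc) as [Cx Cy].
  pose proof (lim0_chord a b x s Cx Hs) as Lcx. pose proof (lim0_chord a b y s Cy Hs) as Lcy.
  pose proof (lim0_dchord a b x s Cx Hs) as Ldx. pose proof (lim0_dchord a b y s Cy Hs) as Ldy.
  apply (near0_impl _ _ (area_identity_third_vertex HU)). cbv zeta. intros h1 _ [H01 EQ].
  set (k := curvature x y s). set (t := tangent x y s) in *.
  set (w := vsub (curve x y (s+h1)) (curve x y s)) in *. set (t1 := tangent x y (s+h1)) in *.
  assert (E : (cross w t1 * k) ^ 2 =
               lambda s * (Rabs (cross t t1) * Rabs k * Rabs (cross t1 t)) * Rabs (cross w t)).
  { apply (lim0_unique_near _ _ _ _ EQ);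
      unfold k, curvature, cross, vadd, vscal, chordv, dchordv, t, tangent; cbn [fst snd];
      (eapply lim0_eq_limit; [lim0_tac|]); [ring | now rewrite !Rmult_0_l, !Rplus_0_r]. }
  replace (Rabs (cross t1 t)) with (Rabs (cross t t1)) in E
    by (rewrite <- Rabs_Ropp; f_equal; unfold cross; ring).
  rewrite <- (pow2_abs (cross t t1)).
  transitivity ((cross w t1 * k) ^ 2); [ring|]. rewrite E. ring.
Qed.

Lemma lambda_half : U_eq_lambda_T_near a b x y lambda s -> lambda s = 1 / 2.
Proof.
  intros HU.
  pose proof (area_relation_two_points HU) as E0.
  destruct (strictly_convex_C3 _ _ _ _ Hsc) as [Cx Cy].
  pose proof (strictly_convex_curvature_neq0 _ _ _ _ _ Hsc Hs) as Hk.
  pose proof (lim0_chord a b x s Cx Hs) as Lcx. pose proof (lim0_chord a b y s Cy Hs) as Lcy.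
  pose proof (lim0_chord2 a b x s Cx Hs) as L2x. pose proof (lim0_chord2 a b y s Cy Hs) as L2y.
  pose proof (lim0_dchord a b x s Cx Hs) as Ldx. pose proof (lim0_dchord a b y s Cy Hs) as Ldy.
  set (k := curvature x y s) in *. set (t := tangent x y s).
  set (P := fun h => cross (chord2v x y s h) t + cross (chordv x y s h) (dchordv x y s h)).
  set (V := fun h => cross t (dchordv x y s h)).
  set (W := fun h => cross (chord2v x y s h) t).
  assert (LP : lim0 (fun h => k ^ 2 * P h ^ 2) (k ^ 2 * (k / 2) ^ 2)).
  { unfold P, k, t, curvature, cross, chord2v, chordv, dchordv, tangent; cbn [fst snd].
    eapply lim0_eq_limit; [lim0_tac | field]. }
  assert (LV : lim0 (fun h => lambda s * V h ^ 2 * Rabs k * Rabs (W h))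
                    (lambda s * k ^ 2 * Rabs k * Rabs (- k / 2))).
  { unfold V, W, k, t, curvature, cross, chord2v, dchordv, tangent; cbn [fst snd].
    eapply lim0_eq_limit; [lim0_tac | do 2 f_equal; field]. }
  assert (EQ : near0 (fun h => k ^ 2 * P h ^ 2 = lambda s * V h ^ 2 * Rabs k * Rabs (W h))).
  { apply (near0_impl _ _ E0). intros h Hh E. fold k t in E.
    rewrite (curve_shift x y s h), (tangent_shift x y s h) in E by auto.
    fold t in E. rewrite cross_shift_r in E.
    replace (cross (vsub (vadd (curve x y s) (vscal h (chordv x y s h))) (curve x y s))
                   (vadd t (vscal h (dchordv x y s h)))) with (h ^ 2 * P h) in E
      by (unfold P, t, cross, vsub, vadd, vscal, chordv, chord2v, chord, tangent; cbn [fst snd]; ring).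
    replace (cross (vsub (vadd (curve x y s) (vscal h (chordv x y s h))) (curve x y s)) t)
      with (h ^ 2 * W h) in E
      by (unfold W, t, cross, vsub, vadd, vscal, chordv, chord2v, chord, tangent; cbn [fst snd]; ring).
    apply (cancel_pow4 h); auto. }
  pose proof (lim0_unique_near _ _ _ _ EQ LP LV) as E.
  assert (Hk4 : k ^ 4 <> 0) by (apply pow_nonzero; auto).
  assert (Hkk : Rabs k * Rabs k = k * k) by (rewrite <- Rabs_mult; apply Rabs_right, Rle_ge, Rle_0_sqr).
  replace (Rabs (- k / 2)) with (Rabs k / 2) in E
    by (unfold Rdiv; rewrite Rabs_mult, Rabs_Ropp, (Rabs_right (/ 2)) by lra; reflexivity).
  apply (Rmult_eq_reg_l (k ^ 4)); auto. symmetry.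
  transitivity (2 * (k ^ 2 * (k / 2) ^ 2)); [field|]. rewrite E.
  replace (k ^ 4) with (k ^ 2 * (Rabs k * Rabs k)) by (rewrite Hkk; ring). field.
Qed.

End AtPoint.

(** * The ODE in the tangent frame and its integration *)

Definition dot (u v : pt) : R := fst u * fst v + snd u * snd v.

Definition sg (r : R) : R := if Rle_dec 0 r then 1 else -1.

Lemma sg_cases r : sg r = 1 \/ sg r = -1.
Proof. unfold sg; destruct Rle_dec; auto. Qed.

Lemma sg_sq r : sg r * sg r = 1.
Proof. unfold sg; destruct Rle_dec; ring. Qed.

Lemma sg_mul_self r : sg r * r = Rabs r.
Proof. unfold sg, Rabs; destruct Rle_dec; destruct Rcase_abs; lra. Qed.

Lemma dot_cross_identity (t w t1 : pt) :
  dot t w * cross t t1 - cross t w * dot t t1 = dot t t * cross w t1.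
Proof. destruct t, w, t1. unfold dot, cross; simpl. ring. Qed.

Lemma frame_ode_algebra (t w t1 : pt) e k :
  dot t t = 1 -> e * e = 1 -> k <> 0 -> e * k = Rabs k -> 0 < e * cross t w ->
  k ^ 2 * cross w t1 ^ 2 = 1 / 2 * cross t t1 ^ 2 * Rabs k * Rabs (cross w t) ->
  2 * Rabs k * (dot t w * (e * cross t t1) - (e * cross t w) * dot t t1) ^ 2 =
    (e * cross t t1) ^ 2 * (e * cross t w).
Proof.
  intros Ht He Hk0 Hek Hq E.
  replace (dot t w * (e * cross t t1) - e * cross t w * dot t t1) with (e * cross w t1)
    by (rewrite <- (Rmult_1_l (cross w t1)), <- Ht, <- dot_cross_identity; ring).
  replace (Rabs (cross w t)) with (e * cross t w) in E.
  2:{ rewrite <- (Rabs_right (e * cross t w)) by lra. rewrite Rabs_mult.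
      replace (Rabs e) with 1 by (unfold Rabs; destruct Rcase_abs; nra).
      rewrite Rmult_1_l, <- Rabs_Ropp. f_equal. unfold cross. ring. }
  assert (Hk2 : k ^ 2 = Rabs k * Rabs k) by (rewrite <- Hek; nra).
  apply (Rmult_eq_reg_l (Rabs k)); [|now apply Rabs_no_R0].
  replace (Rabs k * (2 * Rabs k * (e * cross w t1) ^ 2))
    with (2 * (e * e) * (k ^ 2 * cross w t1 ^ 2)) by (rewrite Hk2; ring).
  rewrite E, He. replace ((e * cross t t1) ^ 2) with ((e * e) * cross t t1 ^ 2) by ring.
  rewrite He. field.
Qed.

(** Coordinates of [Z] in the frame [(A; t, e J t)], [J] the rotation by a right angle. *)
Definition frame_x (A t Z : pt) : R := dot t (vsub Z A).
Definition frame_y (A t : pt) (e : R) (Z : pt) : R := e * cross t (vsub Z A).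

(** The normal [sg (curvature) J X'(s)] points to the convex side; as functions of [h],
    [(frame_u, frame_v)] is the derivative of [(frame_p, frame_q)]. *)
Definition frame_p x y s h := frame_x (curve x y s) (tangent x y s) (curve x y (s+h)).
Definition frame_q x y s h :=
  frame_y (curve x y s) (tangent x y s) (sg (curvature x y s)) (curve x y (s+h)).
Definition frame_u x y s h := dot (tangent x y s) (tangent x y (s+h)).
Definition frame_v x y s h := sg (curvature x y s) * cross (tangent x y s) (tangent x y (s+h)).

Lemma arclength_dot a b x y s : arclength_on a b x y -> in_I a b s ->
  dot (tangent x y s) (tangent x y s) = 1.
Proof. intros H Hs. rewrite <- (H s Hs). unfold dot, tangent; simpl. ring. Qed.

Section Frame.

Variables (a b : Rbar) (x y : R -> R) (lambda : R -> R) (s : R).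
Hypotheses (Hsc : strictly_convex a b x y) (Harc : arclength_on a b x y) (Hs : in_I a b s).

Lemma frame_signs : near0 (fun h =>
    0 < frame_q x y s h /\
    0 < frame_p x y s h * frame_v x y s h - frame_q x y s h * frame_u x y s h /\
    0 < frame_v x y s h * h).
Proof.
  destruct (strictly_convex_C3 _ _ _ _ Hsc) as [Cx Cy].
  pose proof (strictly_convex_curvature_neq0 _ _ _ _ _ Hsc Hs) as Hk.
  pose proof (lim0_chord a b x s Cx Hs) as Lcx. pose proof (lim0_chord a b y s Cy Hs) as Lcy.
  pose proof (lim0_chord2 a b x s Cx Hs) as L2x. pose proof (lim0_chord2 a b y s Cy Hs) as L2y.
  pose proof (lim0_dchord a b x s Cx Hs) as Ldx. pose proof (lim0_dchord a b y s Cy Hs) as Ldy.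
  pose proof (arclength_dot a b x y s Harc Hs) as Ht.
  set (k := curvature x y s) in *. set (e := sg k). set (t := tangent x y s) in *.
  assert (HK : 0 < Rabs k) by now apply Rabs_pos_lt.
  set (Q := fun h => e * cross t (chord2v x y s h)).
  set (V := fun h => e * cross t (dchordv x y s h)).
  set (G := fun h => e * (dot t (chordv x y s h) * cross t (dchordv x y s h) -
                          cross t (chord2v x y s h) * (dot t t + h * dot t (dchordv x y s h)))).
  assert (LQ : lim0 Q (Rabs k / 2)).
  { rewrite <- sg_mul_self. fold e. unfold Q, k, t, curvature, cross, chord2v, tangent; cbn [fst snd].
    eapply lim0_eq_limit; [lim0_tac | field]. }
  assert (LV : lim0 V (Rabs k)).
  { rewrite <- sg_mul_self. fold e. unfold V, k, t, curvature, cross, dchordv, tangent; cbn [fst snd].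
    eapply lim0_eq_limit; [lim0_tac | ring]. }
  assert (LG : lim0 G (Rabs k / 2)).
  { rewrite <- sg_mul_self. fold e. revert Ht.
    unfold G, k, t, curvature, dot, cross, chordv, chord2v, dchordv, tangent; cbn [fst snd]. intros Ht.
    eapply lim0_eq_limit; [lim0_tac|].
    replace (Derive x s * Derive x s + Derive y s * Derive y s) with 1 by (rewrite <- Ht; ring).
    field. }
  assert (HK2 : 0 < Rabs k / 2) by lra.
  apply (near0_impl _ _ (near0_and _ _ (lim0_near0_pos _ _ LQ HK2)
           (near0_and _ _ (lim0_near0_pos _ _ LV HK) (lim0_near0_pos _ _ LG HK2)))).
  intros h Hh0 [Pq [Pv Pg]].
  assert (Hh2 : 0 < h ^ 2) by now apply pow2_gt_0.
  assert (Eq : frame_q x y s h = h ^ 2 * Q h).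
  { unfold frame_q, frame_y. rewrite curve_shift by auto. fold k e t.
    unfold Q, t, cross, vsub, vadd, vscal, chordv, chord2v, chord, tangent; cbn [fst snd]. ring. }
  assert (Ev : frame_v x y s h = h * V h).
  { unfold frame_v. rewrite tangent_shift by auto. fold k e t. rewrite cross_shift_r. unfold V. ring. }
  assert (Eg : frame_p x y s h * frame_v x y s h - frame_q x y s h * frame_u x y s h = h ^ 2 * G h).
  { rewrite Eq, Ev. unfold frame_p, frame_x, frame_u.
    rewrite curve_shift, tangent_shift by auto. fold t.
    unfold Q, V, G, t, dot, cross, vsub, vadd, vscal, chordv, chord2v, chord, tangent; cbn [fst snd].
    ring. }
  rewrite Eg, Eq, Ev. split; [now apply Rmult_lt_0_compat|]. split; [now apply Rmult_lt_0_compat|].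
  replace (h * V h * h) with (h ^ 2 * V h) by ring. now apply Rmult_lt_0_compat.
Qed.

Lemma frame_ode : U_eq_lambda_T_near a b x y lambda s ->
  near0 (fun h =>
    in_I a b (s + h) /\ 0 < frame_q x y s h /\
    0 < frame_p x y s h * frame_v x y s h - frame_q x y s h * frame_u x y s h /\
    0 < frame_v x y s h * h /\
    2 * Rabs (curvature x y s) *
      (frame_p x y s h * frame_v x y s h - frame_q x y s h * frame_u x y s h) ^ 2 =
    frame_v x y s h ^ 2 * frame_q x y s h).
Proof.
  intros HU.
  pose proof (lambda_half a b x y lambda s Hsc Hs HU) as Hl.
  destruct (in_I_near a b s Hs) as [eta [Heta Hin]].
  apply (near0_impl _ _ (near0_and _ _ (area_relation_two_points a b x y lambda s Hsc Hs HU)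
                          (near0_and _ _ (near0_abs_lt _ Heta) frame_signs))).
  intros h Hh0 [Rh [Hh [Pq [PX Pv]]]].
  split; [now apply Hin|]. split; [exact Pq|]. split; [exact PX|]. split; [exact Pv|].
  revert Pq. unfold frame_p, frame_q, frame_x, frame_y, frame_u, frame_v. intros Pq.
  apply frame_ode_algebra; [now apply (arclength_dot a b) | apply sg_sq
    | now apply (strictly_convex_curvature_neq0 a b) | apply sg_mul_self | exact Pq |].
  rewrite Hl in Rh. exact Rh.
Qed.

End Frame.

Definition parab_eq (A t : pt) (e K C : R) (Z : pt) : R :=
  K * (frame_x A t Z - C * frame_y A t e Z) ^ 2 - 2 * frame_y A t e Z.

(** [parab_C] is the value of [C] giving third-order contact with the curve at [X(s)]. *)
Definition parab_C x y s :=
  - sg (curvature x y s) * (Derive x s * Derive_n y 3 s - Derive y s * Derive_n x 3 s) /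
    (3 * Rabs (curvature x y s) ^ 2).

Definition osc_parab_eq x y s (Z : pt) : R :=
  parab_eq (curve x y s) (tangent x y s) (sg (curvature x y s)) (Rabs (curvature x y s))
    (parab_C x y s) Z.

Lemma osc_parab_eq_frame x y s h : osc_parab_eq x y s (curve x y (s + h)) =
  Rabs (curvature x y s) * (frame_p x y s h - parab_C x y s * frame_q x y s h) ^ 2
  - 2 * frame_q x y s h.
Proof. reflexivity. Qed.

Lemma is_derive_zero_eq (F : R -> R) h1 h2 :
  (forall c, Rmin h1 h2 <= c <= Rmax h1 h2 -> is_derive F c 0) -> F h1 = F h2.
Proof.
  intros HD. destruct (MVT_gen F h1 h2 (fun _ => 0)) as [c [_ E]]; [| |lra].
  - intros c Hc. apply HD. lra.
  - intros c Hc. now apply (is_derive_continuity_pt F c 0), HD.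
Qed.

Lemma lim0_const_on_side G l k d sgn : lim0 G l -> 0 < d -> sgn * sgn = 1 ->
  (forall h, 0 < sgn * h < d -> G h = k) -> k = l.
Proof.
  intros L Hd Hsg E. apply Rminus_diag_uniq, Rabs_eq_0.
  apply Rle_antisym; [|apply Rabs_pos]. apply Rnot_lt_le. intros Hlt.
  destruct (L _ Hlt) as [d' [Hd' P]].
  set (r := Rmin d d' / 2).
  assert (Hr : 0 < r) by (unfold r; pose proof (Rmin_pos d d' Hd Hd'); lra).
  assert (Hrd : r < d /\ r < d') by (unfold r; pose proof (Rmin_l d d'); pose proof (Rmin_r d d'); lra).
  assert (Hs : sgn * (sgn * r) = r) by (rewrite <- Rmult_assoc, Hsg; ring).
  assert (Hsr : Rabs (sgn * r) = r).
  { rewrite Rabs_mult, (Rabs_right r) by lra.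
    replace (Rabs sgn) with 1 by (unfold Rabs; destruct Rcase_abs; nra). ring. }
  specialize (P (sgn * r)). rewrite E in P by lra.
  assert (sgn * r <> 0) by (intros Z; rewrite Z, Rmult_0_r in Hs; lra).
  specialize (P ltac:(auto) ltac:(lra)). lra.
Qed.

Lemma arclength_orth a b x y s : C3_on a b x -> C3_on a b y -> arclength_on a b x y -> in_I a b s ->
  Derive x s * Derive_n x 2 s + Derive y s * Derive_n y 2 s = 0.
Proof.
  intros Cx Cy Harc Hs.
  destruct (C3_on_is_derive a b x s Cx Hs) as [_ [D2x _]].
  destruct (C3_on_is_derive a b y s Cy Hs) as [_ [D2y _]].
  destruct (in_I_near a b s Hs) as [eta [Heta Hin]].
  assert (H1 : is_derive (fun t => Derive x t ^ 2 + Derive y t ^ 2) s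
      (2 * (Derive x s * Derive_n x 2 s + Derive y s * Derive_n y 2 s))).
  { auto_derive; [split; [now exists (Derive_n x 2 s) | split; [now exists (Derive_n y 2 s) | auto]]|].
    replace (Derive (fun t => Derive x t) s) with (Derive_n x 2 s)
      by (symmetry; now apply is_derive_unique).
    replace (Derive (fun t => Derive y t) s) with (Derive_n y 2 s)
      by (symmetry; now apply is_derive_unique).
    ring. }
  assert (H2 : is_derive (fun t => Derive x t ^ 2 + Derive y t ^ 2) s 0).
  { apply (is_derive_ext_loc (fun _ => 1)); [|now auto_derive].
    exists (mkposreal eta Heta). intros t Ht. rewrite ball_R_abs in Ht.
    replace t with (s + (t - s)) by ring. symmetry. apply Harc, Hin, Ht. }
  pose proof (is_derive_unique _ _ _ H1) as E1. rewrite (is_derive_unique _ _ _ H2) in E1. lra.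
Qed.

Lemma frame_is_derive a b x y s h : C3_on a b x -> C3_on a b y -> in_I a b (s + h) ->
  is_derive (frame_p x y s) h (frame_u x y s h) /\ is_derive (frame_q x y s) h (frame_v x y s h).
Proof.
  intros Cx Cy Hi.
  destruct (C3_on_is_derive a b x (s+h) Cx Hi) as [Dx _].
  destruct (C3_on_is_derive a b y (s+h) Cy Hi) as [Dy _].
  unfold frame_p, frame_q, frame_x, frame_y, frame_u, frame_v, dot, cross, vsub, curve, tangent.
  cbn [fst snd].
  split; auto_derive; repeat split; try (now exists (Derive x (s + h)));
    try (now exists (Derive y (s + h))).
  all: change (fun z : R => x z) with x; change (fun z : R => y z) with y; ring.
Qed.

Lemma ode_sqrt_form K m q X v sgn : 0 < m -> m * m = 2 * K -> 0 < q -> 0 < X ->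
  0 < sgn * v -> sgn * sgn = 1 -> 2 * K * X ^ 2 = v ^ 2 * q -> X = sgn * v * sqrt q / m.
Proof.
  intros Hm Hm2 Hq HX Hv Hsg E.
  pose proof (sqrt_lt_R0 q Hq) as Hr. pose proof (sqrt_sqrt q (Rlt_le _ _ Hq)) as Hr2.
  apply Rsqr_inj; [lra | left; apply Rdiv_lt_0_compat; [now apply Rmult_lt_0_compat | lra] |].
  unfold Rsqr. apply (Rmult_eq_reg_l (m * m)); [|nra].
  transitivity (2 * K * X ^ 2); [rewrite Hm2; ring|]. rewrite E.
  replace (v ^ 2 * q) with ((sgn * sgn) * v ^ 2 * (sqrt q * sqrt q)) by (rewrite Hsg, Hr2; ring).
  field. lra.
Qed.

Lemma first_integral_derive (p q u v : R -> R) h m sgn :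
  is_derive p h (u h) -> is_derive q h (v h) -> 0 < q h -> 0 < m ->
  p h * v h - q h * u h = sgn * v h * sqrt (q h) / m ->
  is_derive (fun h => p h / q h - sgn * 2 * / m / sqrt (q h)) h 0.
Proof.
  intros Hp Hq Hqh Hm E.
  assert (Hr : 0 < sqrt (q h)) by now apply sqrt_lt_R0.
  auto_derive; [repeat split; try (eexists; eassumption); lra|].
  replace (Derive (fun z : R => p z) h) with (u h) by (symmetry; now apply is_derive_unique).
  replace (Derive (fun z : R => q z) h) with (v h) by (symmetry; now apply is_derive_unique).
  replace (u h) with ((p h * v h - sgn * v h * sqrt (q h) / m) / q h) by (rewrite <- E; field; lra).
  assert (Hr2 : sqrt (q h) * sqrt (q h) = q h) by (apply sqrt_sqrt; lra).
  set (r := sqrt (q h)) in *. rewrite <- Hr2. field. lra.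
Qed.

Lemma sqrt_pow2_mul h Q : 0 <= Q -> sqrt (h ^ 2 * Q) = Rabs h * sqrt Q.
Proof.
  intros HQ. rewrite sqrt_mult by (auto; apply pow2_ge_0). f_equal.
  now rewrite <- sqrt_Rsqr_abs, Rsqr_pow2.
Qed.

Lemma first_integral_expansion h e K m sgn P3 Q3 :
  h <> 0 -> e * e = 1 -> 0 < K -> 0 < m -> m * m = 2 * K -> 0 < sgn * h -> sgn * sgn = 1 ->
  0 < K / 2 + h * (e * Q3) -> 0 < 1 + h ^ 2 * P3 ->
  (h * (1 + h ^ 2 * P3)) / (h ^ 2 * (K / 2 + h * (e * Q3)))
    - sgn * 2 * / m / sqrt (h ^ 2 * (K / 2 + h * (e * Q3))) =
  (2 * h * P3 + h ^ 3 * P3 ^ 2 - 2 / K * e * Q3) *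
    / ((K / 2 + h * (e * Q3)) * (1 + h ^ 2 * P3 + 2 / m * sqrt (K / 2 + h * (e * Q3)))).
Proof.
  intros Hh He HK Hm Hm2 Hsh Hsg HQd Ha.
  set (Qd := K / 2 + h * (e * Q3)) in *. set (a := 1 + h ^ 2 * P3) in *.
  rewrite sqrt_pow2_mul by lra.
  replace (Rabs h) with (sgn * h)
    by (destruct (Rcase_abs h); [rewrite Rabs_left | rewrite Rabs_right]; nra).
  set (r := sqrt Qd). assert (Hr : 0 < r) by now apply sqrt_lt_R0.
  assert (Hr2 : r * r = Qd) by (apply sqrt_sqrt; lra).
  assert (Hsum : 0 < a * m + 2 * r) by nra.
  replace (2 * h * P3 + h ^ 3 * P3 ^ 2 - 2 / K * e * Q3) with ((a ^ 2 - 4 * (r * r) / (m * m)) / h)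
    by (rewrite Hr2, Hm2; unfold a, Qd; field; split; lra).
  rewrite <- Hr2. field. repeat split; try lra; nra.
Qed.

(** A first integral of the ODE of [frame_ode] on each side of [s], [sgn] being the sign of [h]. *)
Definition first_integral x y s sgn h :=
  frame_p x y s h / frame_q x y s h
  - sgn * 2 * / sqrt (2 * Rabs (curvature x y s)) / sqrt (frame_q x y s h).

Definition taylor_remv x y s h : pt := (taylor_rem x s h, taylor_rem y s h).

Lemma sg_of_pos_mul sgn h : (sgn = 1 \/ sgn = -1) -> 0 < sgn * h -> sg h = sgn.
Proof. intros [-> | ->] H; unfold sg; destruct Rle_dec; lra. Qed.

Section Integration.

Variables (a b : Rbar) (x y : R -> R) (lambda : R -> R) (s : R).
Hypotheses (Hsc : strictly_convex a b x y) (Harc : arclength_on a b x y) (Hs : in_I a b s).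

Lemma frame_pq_expand h : h <> 0 ->
  frame_p x y s h = h * (1 + h ^ 2 * dot (tangent x y s) (taylor_remv x y s h)) /\
  frame_q x y s h = h ^ 2 * (Rabs (curvature x y s) / 2 +
                             h * (sg (curvature x y s) * cross (tangent x y s) (taylor_remv x y s h))).
Proof.
  intros H0.
  destruct (strictly_convex_C3 _ _ _ _ Hsc) as [Cx Cy].
  pose proof (Harc s Hs) as HN. pose proof (arclength_orth a b x y s Cx Cy Harc Hs) as HM.
  rewrite <- sg_mul_self.
  unfold frame_p, frame_q, frame_x, frame_y, dot, cross, vsub, curve, tangent, taylor_remv.
  cbn [fst snd].
  rewrite (chord_expand x s h), (chord_expand y s h) by auto.
  unfold chord, chord2, curvature. split; [|field].
  transitivity (h * ((Derive x s ^ 2 + Derive y s ^ 2) + h / 2 * (Derive x s * Derive_n x 2 s +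
     Derive y s * Derive_n y 2 s) +
     h ^ 2 * (Derive x s * taylor_rem x s h + Derive y s * taylor_rem y s h)));
    [field|].
  rewrite HN, HM. field.
Qed.

Lemma lim0_first_integral : lim0 (fun h => first_integral x y s (sg h) h) (parab_C x y s).
Proof.
  destruct (strictly_convex_C3 _ _ _ _ Hsc) as [Cx Cy].
  pose proof (lim0_taylor_rem a b x s Cx Hs) as LRx. pose proof (lim0_taylor_rem a b y s Cy Hs) as LRy.
  set (k := curvature x y s). set (e := sg k). set (K := Rabs k). set (t := tangent x y s).
  assert (HK : 0 < K) by now apply Rabs_pos_lt, (strictly_convex_curvature_neq0 a b).
  set (P3 := fun h => dot t (taylor_remv x y s h)).
  set (Q3 := fun h => cross t (taylor_remv x y s h)).
  set (Qd := fun h => K / 2 + h * (e * Q3 h)).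
  set (A := fun h => 1 + h ^ 2 * P3 h).
  set (m := sqrt (2 * K)).
  assert (Hm : 0 < m) by (apply sqrt_lt_R0; lra).
  assert (Hm2 : m * m = 2 * K) by (apply sqrt_sqrt; lra).
  assert (LQd : lim0 Qd (K / 2)).
  { unfold Qd, Q3, t, cross, taylor_remv; cbn [fst snd]. eapply lim0_eq_limit; [lim0_tac | field]. }
  assert (LA : lim0 A 1).
  { unfold A, P3, t, dot, taylor_remv; cbn [fst snd]. eapply lim0_eq_limit; [lim0_tac | field]. }
  apply (lim0_near_ext (fun h => (2 * h * P3 h + h ^ 3 * P3 h ^ 2 - 2 / K * e * Q3 h) *
                                 / (Qd h * (A h + 2 / m * sqrt (Qd h))))).
  - apply (near0_impl _ _ (near0_and _ _ (lim0_near0_pos _ _ LQd ltac:(lra))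
                                           (lim0_near0_pos _ _ LA Rlt_0_1))).
    intros h H0 [PQd PA]. unfold first_integral. fold k K m.
    destruct (frame_pq_expand h H0) as [-> ->]. symmetry.
    apply first_integral_expansion; [exact H0 | apply sg_sq | exact HK | exact Hm | exact Hm2 | |
                                     apply sg_sq | exact PQd | exact PA].
    rewrite sg_mul_self. now apply Rabs_pos_lt.
  - assert (Hsq : sqrt (K / 2) = m / 2).
    { rewrite <- (sqrt_pow2 (m / 2)) by lra. f_equal.
      replace ((m / 2) ^ 2) with (m * m / 4) by field. rewrite Hm2. field. }
    eapply lim0_eq_limit.
    + apply lim0_mult; [unfold P3, Q3, t, dot, cross, taylor_remv; cbn [fst snd]; lim0_tac|].
      apply lim0_inv; [lim0_tac|].
      rewrite Hsq. replace (K / 2 * (1 + 2 / m * (m / 2))) with K by (field; lra). lra.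
    + rewrite Hsq. unfold parab_C, t, tangent; cbn [fst snd]. fold k e K. field. split; lra.
Qed.

Lemma first_integral_const_near : U_eq_lambda_T_near a b x y lambda s ->
  exists d, 0 < d /\ forall h, h <> 0 -> Rabs h < d -> first_integral x y s (sg h) h = parab_C x y s.
Proof.
  intros HU.
  destruct (frame_ode a b x y lambda s Hsc Harc Hs HU) as [d [Hd Near]].
  destruct (strictly_convex_C3 _ _ _ _ Hsc) as [Cx Cy].
  set (K := Rabs (curvature x y s)).
  assert (HK : 0 < K) by now apply Rabs_pos_lt, (strictly_convex_curvature_neq0 a b).
  set (m := sqrt (2 * K)).
  assert (Hm : 0 < m) by (apply sqrt_lt_R0; lra).
  assert (Hm2 : m * m = 2 * K) by (apply sqrt_sqrt; lra).
  assert (DF : forall sgn h, (sgn = 1 \/ sgn = -1) -> h <> 0 -> Rabs h < d -> 0 < sgn * h ->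
     is_derive (first_integral x y s sgn) h 0).
  { intros sgn h Hsg H0 Hh Hsh. destruct (Near h H0 Hh) as [Hi [Pq [PX [Pv ODE]]]].
    destruct (frame_is_derive a b x y s h Cx Cy Hi) as [Dp Dq].
    apply (first_integral_derive _ _ (frame_u x y s) (frame_v x y s)); auto.
    assert (Hsg2 : sgn * sgn = 1) by (destruct Hsg as [-> | ->]; ring).
    apply (ode_sqrt_form K); auto.
    assert (0 < sgn * h * (frame_v x y s h * h)) by now apply Rmult_lt_0_compat.
    nra. }
  assert (Side : forall h1 h2, h1 <> 0 -> Rabs h1 < d -> Rabs h2 < d -> 0 < sg h1 * h2 ->
     first_integral x y s (sg h1) h1 = first_integral x y s (sg h1) h2).
  { intros h1 h2 H1 Hh1 Hh2 Hs12. apply is_derive_zero_eq. intros c Hc.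
    pose proof (sg_mul_self h1) as Hs1. pose proof (Rabs_pos_lt h1 H1).
    revert Hh1 Hh2 Hs12 Hs1. unfold Rmin, Rmax in Hc.
    destruct (sg_cases h1) as [-> | ->]; intros; apply DF; auto;
      unfold Rabs in *; destruct Rle_dec; repeat destruct Rcase_abs; lra. }
  exists d. split; auto. intros h H0 Hh.
  apply (lim0_const_on_side _ _ _ d (sg h) lim0_first_integral Hd (sg_sq h)).
  intros h' Hh'. assert (Eh' : sg h' = sg h) by (apply sg_of_pos_mul; [apply sg_cases | lra]).
  rewrite Eh'. symmetry. apply Side; auto; [rewrite <- sg_mul_self, Eh' | ]; lra.
Qed.

Lemma osc_parabola_near : U_eq_lambda_T_near a b x y lambda s ->
  exists d, 0 < d /\ forall h, Rabs h < d ->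
    in_I a b (s + h) /\ osc_parab_eq x y s (curve x y (s + h)) = 0.
Proof.
  intros HU.
  destruct (first_integral_const_near HU) as [d1 [Hd1 Hconst]].
  destruct (frame_ode a b x y lambda s Hsc Harc Hs HU) as [d2 [Hd2 Near]].
  set (K := Rabs (curvature x y s)).
  assert (HK : 0 < K) by now apply Rabs_pos_lt, (strictly_convex_curvature_neq0 a b).
  set (m := sqrt (2 * K)).
  assert (Hm : 0 < m) by (apply sqrt_lt_R0; lra).
  assert (Hm2 : m * m = 2 * K) by (apply sqrt_sqrt; lra).
  exists (Rmin d1 d2). split; [now apply Rmin_pos|]. intros h Hh.
  pose proof (Rmin_l d1 d2) as Hmin1. pose proof (Rmin_r d1 d2) as Hmin2.
  rewrite osc_parab_eq_frame. fold K.
  destruct (Req_dec h 0) as [->|H0].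
  - split; [now rewrite Rplus_0_r|].
    unfold frame_p, frame_q, frame_x, frame_y, dot, cross, vsub.
    rewrite !Rplus_0_r, !Rminus_diag. cbn [fst snd]. ring.
  - destruct (Near h H0 ltac:(lra)) as [Hi [Pq _]]. split; auto.
    pose proof (Hconst h H0 ltac:(lra)) as FE. unfold first_integral in FE. fold K m in FE.
    assert (Hr : 0 < sqrt (frame_q x y s h)) by now apply sqrt_lt_R0.
    assert (Hr2 : sqrt (frame_q x y s h) * sqrt (frame_q x y s h) = frame_q x y s h)
      by (apply sqrt_sqrt; lra).
    set (r := sqrt (frame_q x y s h)) in *.
    replace (frame_p x y s h - parab_C x y s * frame_q x y s h) with (sg h * 2 * r / m)
      by (rewrite <- FE, <- Hr2; field; lra).
    rewrite <- Hr2. replace ((sg h * 2 * r / m) ^ 2) with (sg h * sg h * 4 * (r * r) / (m * m))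
      by (field; lra).
    rewrite sg_sq, Hm2. field. lra.
Qed.

End Integration.

(** * Parabolas through five common points *)

Lemma factor_root c t t1 : c * (t - t1) = 0 -> t <> t1 -> c = 0.
Proof. intros H Ht. apply Rmult_integral in H. destruct H; auto. lra. Qed.

Lemma poly1_vanish c0 c1 t1 t2 : t1 <> t2 ->
  c0 + c1 * t1 = 0 -> c0 + c1 * t2 = 0 -> c0 = 0 /\ c1 = 0.
Proof.
  intros H E1 E2. assert (c1 = 0) by (apply (factor_root _ t2 t1); [lra | auto]).
  subst c1. split; lra.
Qed.

Lemma poly2_vanish c0 c1 c2 t1 t2 t3 : t1 <> t2 -> t1 <> t3 -> t2 <> t3 ->
  (forall t, t = t1 \/ t = t2 \/ t = t3 -> c0 + c1 * t + c2 * t ^ 2 = 0) ->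
  c0 = 0 /\ c1 = 0 /\ c2 = 0.
Proof.
  intros H12 H13 H23 E.
  assert (Q : forall t, t = t2 \/ t = t3 -> (c1 + c2 * t1) + c2 * t = 0).
  { intros t Ht. apply (factor_root _ t t1); [|intros ->; tauto].
    transitivity ((c0 + c1 * t + c2 * t ^ 2) - (c0 + c1 * t1 + c2 * t1 ^ 2)); [ring|].
    rewrite (E t), (E t1) by tauto. ring. }
  destruct (poly1_vanish _ c2 t2 t3 H23 (Q t2 (or_introl eq_refl)) (Q t3 (or_intror eq_refl))).
  subst c2. assert (c1 = 0) by lra. subst c1.
  specialize (E t1 (or_introl eq_refl)). repeat split; lra.
Qed.

Lemma poly3_vanish c0 c1 c2 c3 t1 t2 t3 t4 :
  t1 <> t2 -> t1 <> t3 -> t1 <> t4 -> t2 <> t3 -> t2 <> t4 -> t3 <> t4 ->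
  (forall t, t = t1 \/ t = t2 \/ t = t3 \/ t = t4 -> c0 + c1 * t + c2 * t ^ 2 + c3 * t ^ 3 = 0) ->
  c0 = 0 /\ c1 = 0 /\ c2 = 0 /\ c3 = 0.
Proof.
  intros H12 H13 H14 H23 H24 H34 E.
  assert (Q : forall t, t = t2 \/ t = t3 \/ t = t4 ->
     (c1 + c2 * t1 + c3 * t1 ^ 2) + (c2 + c3 * t1) * t + c3 * t ^ 2 = 0).
  { intros t Ht. apply (factor_root _ t t1); [|intros ->; tauto].
    transitivity ((c0 + c1 * t + c2 * t ^ 2 + c3 * t ^ 3) - (c0 + c1 * t1 + c2 * t1 ^ 2 + c3 * t1 ^ 3));
      [ring|].
    rewrite (E t), (E t1) by tauto. ring. }
  destruct (poly2_vanish _ _ _ t2 t3 t4 H23 H24 H34 Q) as [A [B C]].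
  subst c3. assert (c2 = 0) by lra. subst c2. assert (c1 = 0) by lra. subst c1.
  specialize (E t1 (or_introl eq_refl)). repeat split; lra.
Qed.

Lemma poly4_vanish c0 c1 c2 c3 c4 t1 t2 t3 t4 t5 :
  t1 <> t2 -> t1 <> t3 -> t1 <> t4 -> t1 <> t5 -> t2 <> t3 -> t2 <> t4 -> t2 <> t5 ->
  t3 <> t4 -> t3 <> t5 -> t4 <> t5 ->
  (forall t, t = t1 \/ t = t2 \/ t = t3 \/ t = t4 \/ t = t5 ->
     c0 + c1 * t + c2 * t ^ 2 + c3 * t ^ 3 + c4 * t ^ 4 = 0) ->
  c0 = 0 /\ c1 = 0 /\ c2 = 0 /\ c3 = 0 /\ c4 = 0.
Proof.
  intros H12 H13 H14 H15 H23 H24 H25 H34 H35 H45 E.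
  assert (Q : forall t, t = t2 \/ t = t3 \/ t = t4 \/ t = t5 ->
     (c1 + c2 * t1 + c3 * t1 ^ 2 + c4 * t1 ^ 3) + (c2 + c3 * t1 + c4 * t1 ^ 2) * t +
     (c3 + c4 * t1) * t ^ 2 + c4 * t ^ 3 = 0).
  { intros t Ht. apply (factor_root _ t t1); [|intros ->; tauto].
    transitivity ((c0 + c1 * t + c2 * t ^ 2 + c3 * t ^ 3 + c4 * t ^ 4) -
                  (c0 + c1 * t1 + c2 * t1 ^ 2 + c3 * t1 ^ 3 + c4 * t1 ^ 4)); [ring|].
    rewrite (E t), (E t1) by tauto. ring. }
  destruct (poly3_vanish _ _ _ _ t2 t3 t4 t5 H23 H24 H25 H34 H35 H45 Q) as [A [B [C D]]].
  subst c4. assert (c3 = 0) by lra. subst c3. assert (c2 = 0) by lra. subst c2.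
  assert (c1 = 0) by lra. subst c1.
  specialize (E t1 (or_introl eq_refl)). repeat split; lra.
Qed.

(** A conic [K (w0 + al p + be q)^2 = 2 (r0 + ga p + de q)] containing five points of the parabola
    [p = tau + C' q], [q = K' tau^2 / 2] contains the whole parabola: the degree-4 polynomial in
    [tau] obtained by substitution vanishes. *)
Lemma conic_through_parabola K al be w0 ga de r0 K' C' t1 t2 t3 t4 t5 : 0 < K -> K' <> 0 ->
  t1 <> t2 -> t1 <> t3 -> t1 <> t4 -> t1 <> t5 -> t2 <> t3 -> t2 <> t4 -> t2 <> t5 ->
  t3 <> t4 -> t3 <> t5 -> t4 <> t5 ->
  (forall t, t = t1 \/ t = t2 \/ t = t3 \/ t = t4 \/ t = t5 ->
    K * (w0 + al * (t + C' * (K' * t ^ 2 / 2)) + be * (K' * t ^ 2 / 2)) ^ 2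
    - 2 * (r0 + ga * (t + C' * (K' * t ^ 2 / 2)) + de * (K' * t ^ 2 / 2)) = 0) ->
  be = - al * C' /\ forall p q, K * (w0 + al * p + be * q) ^ 2 - 2 * (r0 + ga * p + de * q) =
     (K * al ^ 2 / K') * (K' * (p - C' * q) ^ 2 - 2 * q).
Proof.
  intros HK HK' H12 H13 H14 H15 H23 H24 H25 H34 H35 H45 E.
  set (B := (al * C' + be) * K' / 2). set (G := (ga * C' + de) * K' / 2).
  destruct (poly4_vanish (K * w0 ^ 2 - 2 * r0) (2 * K * w0 * al - 2 * ga)
     (K * (al ^ 2 + 2 * w0 * B) - 2 * G) (2 * K * al * B) (K * B ^ 2) t1 t2 t3 t4 t5
     H12 H13 H14 H15 H23 H24 H25 H34 H35 H45) as [c0 [c1 [c2 [_ c4]]]].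
  { intros t Ht. rewrite <- (E t Ht). unfold B, G. field. }
  assert (HB : B = 0).
  { apply Rmult_integral in c4. destruct c4 as [c4|c4]; [lra|].
    destruct (Req_dec B 0) as [|HB]; [auto | now apply (pow_nonzero B 2) in HB]. }
  assert (Hbe : be = - al * C').
  { unfold B in HB. apply Rmult_integral in HB. destruct HB as [HB|HB]; [|lra].
    apply Rmult_integral in HB. destruct HB; [lra | contradiction]. }
  split; auto.
  rewrite HB in c2.
  assert (Hga : ga = K * w0 * al) by lra.
  assert (Hr0 : r0 = K * w0 ^ 2 / 2) by lra.
  assert (Hde : de = K * al ^ 2 / K' - ga * C').
  { unfold G in c2. apply (Rmult_eq_reg_l K'); auto. field_simplify; auto. lra. }
  intros p q. rewrite Hbe, Hde, Hga, Hr0. field. auto.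
Qed.

Definition frame_point (A t : pt) (e p q : R) : pt :=
  (fst A + p * fst t - q * e * snd t, snd A + p * snd t + q * e * fst t).

Lemma frame_point_coords A t e Z : dot t t = 1 -> (e = 1 \/ e = -1) ->
  Z = frame_point A t e (frame_x A t Z) (frame_y A t e Z).
Proof.
  destruct A as [A1 A2], t as [t1 t2], Z as [Z1 Z2].
  unfold frame_point, frame_x, frame_y, dot, cross, vsub; cbn [fst snd]. intros N He.
  f_equal; apply Rminus_diag_uniq.
  - transitivity ((Z1 - A1) * (1 - (t1 * t1 + t2 * t2))); [destruct He as [-> | ->]; ring|].
    rewrite N. ring.
  - transitivity ((Z2 - A2) * (1 - (t1 * t1 + t2 * t2))); [destruct He as [-> | ->]; ring|].
    rewrite N. ring.
Qed.

Lemma parab_eq_frame_point A t e K C A' t' e' p q :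
  parab_eq A t e K C (frame_point A' t' e' p q) =
  let m1 := fst t + C * e * snd t in let m2 := snd t - C * e * fst t in
  let n1 := - e * snd t in let n2 := e * fst t in
  K * ((m1 * (fst A' - fst A) + m2 * (snd A' - snd A)) + (m1 * fst t' + m2 * snd t') * p
       + (- m1 * e' * snd t' + m2 * e' * fst t') * q) ^ 2
  - 2 * ((n1 * (fst A' - fst A) + n2 * (snd A' - snd A)) + (n1 * fst t' + n2 * snd t') * p
       + (- n1 * e' * snd t' + n2 * e' * fst t') * q).
Proof. unfold parab_eq, frame_point, frame_x, frame_y, dot, cross, vsub; cbn [fst snd]. ring. Qed.

(** Parameter of a point of the parabola [parab_eq A t e K C = 0]:
    [p = tau + C q], [q = K tau^2 / 2]. *)
Definition parab_param (A t : pt) (e C : R) (Z : pt) : R := frame_x A t Z - C * frame_y A t e Z.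

Lemma parab_param_inj A t e K C Z W : dot t t = 1 -> (e = 1 \/ e = -1) ->
  parab_eq A t e K C Z = 0 -> parab_eq A t e K C W = 0 ->
  parab_param A t e C Z = parab_param A t e C W -> Z = W.
Proof.
  unfold parab_eq, parab_param. intros N He HZ HW E.
  assert (Ey : frame_y A t e Z = frame_y A t e W) by (rewrite E in HZ; lra).
  assert (Ex : frame_x A t Z = frame_x A t W) by (rewrite Ey in E; lra).
  rewrite (frame_point_coords A t e Z), (frame_point_coords A t e W) by auto.
  now rewrite Ex, Ey.
Qed.

Lemma parab_common_point_poly A t e K C A' t' e' K' C' Z : dot t' t' = 1 -> (e' = 1 \/ e' = -1) ->
  parab_eq A t e K C Z = 0 -> parab_eq A' t' e' K' C' Z = 0 ->
  let tau := parab_param A' t' e' C' Z in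
  let m1 := fst t + C * e * snd t in let m2 := snd t - C * e * fst t in
  let n1 := - e * snd t in let n2 := e * fst t in
  K * ((m1 * (fst A' - fst A) + m2 * (snd A' - snd A)) + (m1 * fst t' + m2 * snd t') *
         (tau + C' * (K' * tau ^ 2 / 2)) +
         (- m1 * e' * snd t' + m2 * e' * fst t') * (K' * tau ^ 2 / 2)) ^ 2
  - 2 * ((n1 * (fst A' - fst A) + n2 * (snd A' - snd A)) + (n1 * fst t' + n2 * snd t') *
         (tau + C' * (K' * tau ^ 2 / 2)) + (- n1 * e' * snd t' + n2 * e' * fst t') * (K' * tau ^ 2 / 2))
  = 0.
Proof.
  intros N He HZ HZ' tau m1 m2 n1 n2.
  assert (Hq : K' * tau ^ 2 / 2 = frame_y A' t' e' Z) by (unfold tau, parab_param, parab_eq in *; lra).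
  rewrite Hq. replace (tau + C' * frame_y A' t' e' Z) with (frame_x A' t' Z)
    by (unfold tau, parab_param; ring).
  rewrite (frame_point_coords A' t' e' Z N He), parab_eq_frame_point in HZ. exact HZ.
Qed.

(** The normalisation [K (1 + C^2)] makes the equation of a parabola independent of the frame
    in which it is written. *)
Lemma parab_eqs_proportional A t e K C A' t' e' K' C' (z1 z2 z3 z4 z5 : pt) :
  dot t t = 1 -> (e = 1 \/ e = -1) -> 0 < K ->
  dot t' t' = 1 -> (e' = 1 \/ e' = -1) -> 0 < K' ->
  z1 <> z2 -> z1 <> z3 -> z1 <> z4 -> z1 <> z5 -> z2 <> z3 -> z2 <> z4 -> z2 <> z5 ->
  z3 <> z4 -> z3 <> z5 -> z4 <> z5 ->
  (forall z, z = z1 \/ z = z2 \/ z = z3 \/ z = z4 \/ z = z5 ->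
     parab_eq A t e K C z = 0 /\ parab_eq A' t' e' K' C' z = 0) ->
  forall Z, parab_eq A t e K C Z / (K * (1 + C ^ 2)) = parab_eq A' t' e' K' C' Z / (K' * (1 + C' ^ 2)).
Proof.
  intros N He HK N' He' HK' H12 H13 H14 H15 H23 H24 H25 H34 H35 H45 HZ Z.
  set (tau := parab_param A' t' e' C').
  assert (Tinj : forall z w, (z = z1 \/ z = z2 \/ z = z3 \/ z = z4 \/ z = z5) ->
     (w = z1 \/ w = z2 \/ w = z3 \/ w = z4 \/ w = z5) -> z <> w -> tau z <> tau w).
  { intros z w Hz Hw Hzw E.
    apply Hzw, (parab_param_inj A' t' e' K' C'); auto; [apply HZ | apply HZ]; auto. }
  set (m1 := fst t + C * e * snd t). set (m2 := snd t - C * e * fst t).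
  set (n1 := - e * snd t). set (n2 := e * fst t).
  set (al := m1 * fst t' + m2 * snd t'). set (be := - m1 * e' * snd t' + m2 * e' * fst t').
  destruct (conic_through_parabola K al be (m1 * (fst A' - fst A) + m2 * (snd A' - snd A))
     (n1 * fst t' + n2 * snd t') (- n1 * e' * snd t' + n2 * e' * fst t')
     (n1 * (fst A' - fst A) + n2 * (snd A' - snd A)) K' C'
     (tau z1) (tau z2) (tau z3) (tau z4) (tau z5)) as [Hbe Hid]; auto; try lra;
    try (apply Tinj; tauto).
  { intros s Hs. destruct Hs as [-> | [-> | [-> | [-> | ->]]]];
    match goal with |- context [tau ?z] =>
      destruct (HZ z ltac:(tauto)) as [P P'];
      exact (parab_common_point_poly _ _ _ _ _ _ _ _ _ _ z N' He' P P') end. }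
  assert (Hn : al ^ 2 + be ^ 2 = 1 + C ^ 2).
  { revert N N'. unfold dot. intros N N'.
    transitivity ((m1 ^ 2 + m2 ^ 2) * (fst t' * fst t' + snd t' * snd t'));
      [unfold al, be; destruct He' as [-> | ->]; ring|].
    rewrite N'. transitivity ((1 + C ^ 2) * (fst t * fst t + snd t * snd t));
      [unfold m1, m2; destruct He as [-> | ->]; ring|].
    rewrite N. ring. }
  rewrite Hbe in Hn.
  assert (Hal : al <> 0).
  { intros Z0. rewrite Z0 in Hn. pose proof (pow2_ge_0 C). lra. }
  rewrite (frame_point_coords A' t' e' Z N' He') at 1. rewrite parab_eq_frame_point. cbv zeta.
  fold m1 m2 n1 n2 al be. rewrite Hid. unfold parab_eq.
  replace (1 + C ^ 2) with (al ^ 2 * (1 + C' ^ 2)) by (rewrite <- Hn; ring).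
  field. pose proof (pow2_ge_0 C'). repeat split; lra.
Qed.

(** In the orthonormal coordinates [ta = (p - C q) / r], [om], where [r = sqrt (1 + C^2)], the
    equation [K (p - C q)^2 = 2 q] reads [om = kk ta^2 + ll ta]; completing the square gives the
    vertex form. *)
Lemma parab_eq_zero_on_parabola A t e K C : dot t t = 1 -> (e = 1 \/ e = -1) -> 0 < K ->
  exists (O u v : pt) (k : R),
    k <> 0 /\ fst u ^ 2 + snd u ^ 2 = 1 /\ fst v ^ 2 + snd v ^ 2 = 1 /\
    fst u * fst v + snd u * snd v = 0 /\
    forall Z, parab_eq A t e K C Z = 0 ->
      exists tau, Z = vadd O (vadd (vscal tau u) (vscal (k * tau ^ 2) v)).
Proof.
  destruct A as [A1 A2], t as [tx ty]. unfold dot; cbn [fst snd]. intros N He HK.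
  assert (HC : 0 < 1 + C ^ 2) by (pose proof (pow2_ge_0 C); lra).
  set (r := sqrt (1 + C ^ 2)).
  assert (Hr : 0 < r) by now apply sqrt_lt_R0.
  assert (Hr2 : r * r = 1 + C ^ 2) by (apply sqrt_sqrt; lra).
  assert (Hee : e * e = 1) by (destruct He as [-> | ->]; ring).
  set (u1 := (tx + C * e * ty) / r). set (u2 := (ty - C * e * tx) / r).
  set (kk := e * K * r ^ 3 / 2). set (ll := e * C).
  set (t0 := ll / (2 * kk)). set (c0 := ll ^ 2 / (4 * kk)).
  assert (Hu : u1 ^ 2 + u2 ^ 2 = 1).
  { unfold u1, u2. transitivity ((1 + C ^ 2 * (e * e)) * (tx * tx + ty * ty) / (r * r)); [field; lra|].
    rewrite N, Hee, Hr2. field. lra. }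
  assert (Hkk : kk <> 0).
  { unfold kk. assert (0 < K * r ^ 3) by (apply Rmult_lt_0_compat; auto; apply pow_lt; auto).
    destruct He as [-> | ->]; lra. }
  exists (A1 - t0 * u1 + c0 * u2, A2 - t0 * u2 - c0 * u1), (u1, u2), (- u2, u1), kk.
  cbn [fst snd]. split; [exact Hkk|]. split; [exact Hu|]. split; [lra|]. split; [ring|].
  intros [Z1 Z2] HP.
  set (d1 := Z1 - A1). set (d2 := Z2 - A2).
  set (ta := u1 * d1 + u2 * d2). set (om := - u2 * d1 + u1 * d2).
  assert (Rd1 : d1 = ta * u1 - om * u2).
  { apply Rminus_diag_uniq. transitivity (d1 * (1 - (u1 ^ 2 + u2 ^ 2))); [unfold ta, om; ring|].
    rewrite Hu. ring. }
  assert (Rd2 : d2 = ta * u2 + om * u1).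
  { apply Rminus_diag_uniq. transitivity (d2 * (1 - (u1 ^ 2 + u2 ^ 2))); [unfold ta, om; ring|].
    rewrite Hu. ring. }
  unfold parab_eq, frame_x, frame_y, dot, cross, vsub in HP; cbn [fst snd] in HP. fold d1 d2 in HP.
  assert (Hm : tx * d1 + ty * d2 - C * (e * (tx * d2 - ty * d1)) = r * ta)
    by (unfold ta, u1, u2; field; lra).
  assert (Hn : e * (tx * d2 - ty * d1) = (- C * ta + e * om) / r).
  { replace (- C * ta + e * om) with (e * (tx * d2 - ty * d1) * (1 + C ^ 2) / r)
      by (unfold ta, om, u1, u2; destruct He as [-> | ->]; field; lra).
    rewrite <- Hr2. field. lra. }
  rewrite Hm, Hn in HP.
  assert (Hom : om = kk * ta ^ 2 + ll * ta).
  { assert (H1 : - C * ta + e * om = K * r ^ 3 * ta ^ 2 / 2).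
    { apply (Rmult_eq_reg_l (2 / r)); [| apply Rgt_not_eq, Rdiv_lt_0_compat; lra].
      replace (2 / r * (- C * ta + e * om)) with (2 * ((- C * ta + e * om) / r)) by (field; lra).
      replace (2 / r * (K * r ^ 3 * ta ^ 2 / 2)) with (K * (r * ta) ^ 2) by (field; lra). lra. }
    unfold kk, ll. destruct He as [-> | ->]; lra. }
  exists (ta + t0). unfold vadd, vscal; cbn [fst snd]. unfold t0, c0.
  f_equal.
  - replace Z1 with (A1 + d1) by (unfold d1; ring). rewrite Rd1, Hom. field. auto.
  - replace Z2 with (A2 + d2) by (unfold d2; ring). rewrite Rd2, Hom. field. auto.
Qed.

(** * From local to global *)

Definition osc_parab_norm x y s (Z : pt) : R :=
  osc_parab_eq x y s Z / (Rabs (curvature x y s) * (1 + parab_C x y s ^ 2)).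

Section Globalization.

Variables (a b : Rbar) (x y : R -> R) (lambda : R -> R).
Hypotheses (Hsc : strictly_convex a b x y) (Harc : arclength_on a b x y)
  (HU : forall s, in_I a b s -> U_eq_lambda_T_near a b x y lambda s).

(** Near [s], the osculating parabolas at [s] and [s'] share five points of the curve. *)
Lemma osc_parab_norm_locally_const s : in_I a b s ->
  exists d, 0 < d /\ forall s', Rabs (s' - s) < d ->
    forall Z, osc_parab_norm x y s' Z = osc_parab_norm x y s Z.
Proof.
  intros Hs.
  destruct (osc_parabola_near a b x y lambda s Hsc Harc Hs (HU s Hs)) as [d [Hd D]].
  exists d. split; auto. intros s' Hs' Z.
  assert (Hi' : in_I a b s') by (replace s' with (s + (s' - s)) by ring; apply D; auto).
  destruct (osc_parabola_near a b x y lambda s' Hsc Harc Hi' (HU s' Hi')) as [d' [Hd' D']].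
  pose proof (Rmin_l d' (d - Rabs (s' - s))). pose proof (Rmin_r d' (d - Rabs (s' - s))).
  set (eta := Rmin d' (d - Rabs (s' - s))) in *.
  assert (Heta : 0 < eta) by (apply Rmin_pos; lra).
  set (sig := fun j : R => s' + j * eta / 6).
  assert (Pt : forall j, 0 < j < 6 -> in_I a b (sig j) /\ osc_parab_eq x y s (curve x y (sig j)) = 0 /\
      osc_parab_eq x y s' (curve x y (sig j)) = 0).
  { intros j Hj.
    assert (A : Rabs (sig j - s') < d').
    { unfold sig. replace (s' + j * eta / 6 - s') with (j * eta / 6) by ring.
      rewrite Rabs_right; nra. }
    assert (B : Rabs (sig j - s) < d).
    { unfold sig. replace (s' + j * eta / 6 - s) with ((s' - s) + j * eta / 6) by ring.
      eapply Rle_lt_trans; [apply Rabs_triang|]. rewrite (Rabs_right (j * eta / 6)); nra. }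
    destruct (D (sig j - s) B) as [I1 P1]. destruct (D' (sig j - s') A) as [_ P2].
    replace (s + (sig j - s)) with (sig j) in * by ring.
    replace (s' + (sig j - s')) with (sig j) in * by ring. auto. }
  assert (Dist : forall i j, 0 < i < 6 -> 0 < j < 6 -> i <> j ->
                           curve x y (sig i) <> curve x y (sig j)).
  { intros i j Hi Hj Hij. apply (strictly_convex_curve_neq a b); auto; try apply Pt; auto.
    unfold sig. intros E. apply Hij, (Rmult_eq_reg_r (eta / 6)); [lra | apply Rgt_not_eq; lra]. }
  pose proof (strictly_convex_curvature_neq0 _ _ _ _ _ Hsc Hs) as Hk.
  pose proof (strictly_convex_curvature_neq0 _ _ _ _ _ Hsc Hi') as Hk'.
  pose proof (arclength_dot a b x y s Harc Hs). pose proof (arclength_dot a b x y s' Harc Hi').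
  unfold osc_parab_norm, osc_parab_eq. symmetry.
  apply (parab_eqs_proportional _ _ _ _ _ _ _ _ _ _ (curve x y (sig 1)) (curve x y (sig 2))
     (curve x y (sig 3)) (curve x y (sig 4)) (curve x y (sig 5)));
    auto using sg_cases, Rabs_pos_lt; try (apply Dist; lra).
  intros z Hz. destruct Hz as [-> | [-> | [-> | [-> | ->]]]]; split; apply Pt; lra.
Qed.

Lemma osc_parab_norm_const s1 s2 Z : in_I a b s1 -> in_I a b s2 ->
  osc_parab_norm x y s1 Z = osc_parab_norm x y s2 Z.
Proof.
  intros H1 H2. apply (is_derive_zero_eq (fun s => osc_parab_norm x y s Z)). intros c Hc.
  assert (Hi : in_I a b c)
    by (unfold Rmin, Rmax in Hc; destruct Rle_dec;
        [apply (in_I_between a b s1 s2) | apply (in_I_between a b s2 s1)]; auto).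
  destruct (osc_parab_norm_locally_const c Hi) as [d [Hd L]].
  apply (is_derive_ext_loc (fun _ => osc_parab_norm x y c Z)); [|now auto_derive].
  exists (mkposreal d Hd). intros t Ht. rewrite ball_R_abs in Ht. symmetry. now apply L.
Qed.

Lemma curve_on_osc_parabola s0 s : in_I a b s0 -> in_I a b s -> osc_parab_eq x y s0 (curve x y s) = 0.
Proof.
  intros H0 Hs. pose proof (osc_parab_norm_const s0 s (curve x y s) H0 Hs) as E.
  assert (Hself : osc_parab_eq x y s (curve x y s) = 0)
    by (unfold osc_parab_eq, parab_eq, frame_x, frame_y, dot, cross, vsub; cbn [fst snd];
        rewrite !Rminus_diag; ring).
  unfold osc_parab_norm in E. rewrite Hself, Rdiv_0_l in E.
  assert (Hden : 0 < Rabs (curvature x y s0) * (1 + parab_C x y s0 ^ 2)).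
  { apply Rmult_lt_0_compat; [now apply Rabs_pos_lt, (strictly_convex_curvature_neq0 a b)|].
    pose proof (pow2_ge_0 (parab_C x y s0)). lra. }
  apply (Rmult_eq_reg_r (/ (Rabs (curvature x y s0) * (1 + parab_C x y s0 ^ 2)))).
  - rewrite Rmult_0_l. exact E.
  - apply Rinv_neq_0_compat. lra.
Qed.

End Globalization.

Theorem theorem2 (a b : Rbar) (x y : R -> R) (lambda : R -> R) :
  Rbar_lt a b ->
  strictly_convex a b x y ->
  arclength_on a b x y ->
  (forall s, in_I a b s ->
     exists delta : R, 0 < delta /\
       forall h1 h2 : R,
         Rabs h1 < delta -> Rabs h2 < delta ->
         in_I a b (s + h1) -> in_I a b (s + h2) ->
         curve x y s <> curve x y (s + h1) ->
         curve x y s <> curve x y (s + h2) ->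
         curve x y (s + h1) <> curve x y (s + h2) ->
         cross (tangent x y s) (tangent x y (s + h1)) <> 0 ->
         cross (tangent x y s) (tangent x y (s + h2)) <> 0 ->
         cross (tangent x y (s + h1)) (tangent x y (s + h2)) <> 0 ->
         U_area x y s h1 h2 = lambda s * T_area x y s h1 h2) ->
  (forall s, in_I a b s -> lambda s = 1 / 2) /\
  exists P : pt -> Prop, is_parabola P /\
    forall s, in_I a b s -> P (curve x y s).
Proof.
  intros Hab Hsc Harc HU.
  split; [intros s Hs; exact (lambda_half a b x y lambda s Hsc Hs (HU s Hs))|].
  destruct (in_I_nonempty a b Hab) as [s0 Hs0].
  destruct (parab_eq_zero_on_parabola (curve x y s0) (tangent x y s0) (sg (curvature x y s0))
              (Rabs (curvature x y s0)) (parab_C x y s0))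
    as [O [u [v [k [Hk [Hu [Hv [Huv Hpar]]]]]]]];
    [exact (arclength_dot a b x y s0 Harc Hs0) | apply sg_cases |
     now apply Rabs_pos_lt, (strictly_convex_curvature_neq0 a b)|].
  exists (fun p => exists t, p = vadd O (vadd (vscal t u) (vscal (k * t ^ 2) v))). split.
  - exists O, u, v, k. repeat split; auto.
  - intros s Hs. apply Hpar, (curve_on_osc_parabola a b x y lambda); auto.
Qed.
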